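(* There exists a countable two-dimensional subshift of finite type $X$ whose Cantor–Bendixson rank is at least $\omega$.
   Context: A two-dimensional subshift over a finite alphabet $S$ is a closed subset of $S^{\mathbb{Z}^2}$ (product topology) invariant under both coordinate shifts; it is of finite type (SFT) if it is the set of configurations avoiding a finite set of forbidden finite patterns. Derivatives: $X^{(0)} = X$, $X^{(\alpha+1)}$ is the set of non-isolated points of $X^{(\alpha)}$, and $X^{(\lambda)} = \bigcap_{\alpha<\lambda} X^{(\alpha)}$ for limit $\lambda$. The rank of $X$ is the least ordinal $\lambda$ with $X^{(\lambda)} = X^{(\lambda+1)}$. *)

From Stdlib Require Import ZArith List.
Import ListNotations.
Open Scope Z_scope.

Definition config (A : Type) : Type := Z * Z -> A.

Definition finite_type (A : Type) : Prop := exists l : list A, forall a : A, In a l.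

Record pattern (A : Type) : Type := Pattern {
  pdom : list (Z * Z);
  pval : Z * Z -> A }.
Arguments pdom {A} _.
Arguments pval {A} _.

Definition occurs {A : Type} (x : config A) (p : pattern A) (v : Z * Z) : Prop :=
  forall u, In u (pdom p) -> x (fst v + fst u, snd v + snd u) = pval p u.

Definition SFT {A : Type} (F : list (pattern A)) : config A -> Prop :=
  fun x => forall p, In p F -> forall v, ~ occurs x p v.

(* x and y agree on the box [-N,N]^2 (basic cylinder neighbourhoods of the
   product topology, the alphabet being discrete). *)
Definition agree_box {A : Type} (N : Z) (x y : config A) : Prop :=
  forall i j, Z.abs i <= N -> Z.abs j <= N -> x (i, j) = y (i, j).

Definition isolated {A : Type} (Y : config A -> Prop) (x : config A) : Prop :=
  Y x /\ exists N, forall y, Y y -> agree_box N x y -> forall z, y z = x z.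

Fixpoint deriv {A : Type} (Y : config A -> Prop) (n : nat) : config A -> Prop :=
  match n with
  | O => Y
  | S m => fun x => deriv Y m x /\ ~ isolated (deriv Y m) x
  end.

Definition countable_set {A : Type} (Y : config A -> Prop) : Prop :=
  exists f : nat -> config A, forall x, Y x -> exists k, forall z, f k z = x z.

From Stdlib Require Import ZArith List Lia Bool Classical ClassicalEpsilon Cantor.
Import ListNotations.
Open Scope Z_scope.

(* Abstract core: a nonempty closed set without isolated points is uncountable (a
   diagonal argument producing a limit point that escapes any enumeration).  Hence in
   a countable closed set whose finite derivatives are all nonempty, X^(n) always
   has an isolated point, i.e. X^(n) <> X^(n+1) for every n.

   The SFT is given by a list of allowed 2x2 tiles.  Its configurations are built from
   blocks standing on a horizon row; each block has a leg carrying a mark and an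
   apex, and the rows of consecutive marks and apexes are linked so that marks go
   down and apexes go up by one from leg to leg.
   - Countability: marks and apexes stay above the horizon, so there are finitely
     many legs; the local rules determine a row westwards except at finitely many
     "west events" and eastwards except at legs.  So a valid configuration is
     determined by a column c east of which there is no leg, together with the
     finitely many symbol changes along c and west events west of c: countably many
     descriptions.
   - Rank: the explicit configurations [blocks a b cs] with k legs lie in the
     (b - 1 - k)-th derivative, being limits of configurations with an extra leg
     added far to the east; so every finite derivative is nonempty. *)

Definition closed_set {A : Type} (Y : config A -> Prop) : Prop :=
  forall x, (forall N, exists y, Y y /\ agree_box N x y) -> Y x.

Lemma agree_box_mono {A : Type} (N N' : Z) (x y : config A) :
  N' <= N -> agree_box N x y -> agree_box N' x y.
Proof. intros HN H i j Hi Hj. apply H; lia. Qed.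

Lemma agree_box_trans {A : Type} (N : Z) (x y z : config A) :
  agree_box N x y -> agree_box N y z -> agree_box N x z.
Proof. intros H1 H2 i j Hi Hj. rewrite H1 by assumption. apply H2; assumption. Qed.

Lemma deriv_incl {A : Type} (Y : config A -> Prop) (n : nat) (x : config A) :
  deriv Y n x -> Y x.
Proof. revert x; induction n as [|n IH]; intros x H; [exact H | apply IH, H]. Qed.

Lemma deriv_closed {A : Type} (Y : config A -> Prop) :
  closed_set Y -> forall n, closed_set (deriv Y n).
Proof.
  intros HY n; induction n as [|n IH]; simpl; [exact HY|].
  intros x Hx.
  assert (Hn : deriv Y n x).
  { apply IH. intro N. destruct (Hx N) as [y [[Hy _] Ha]]. exists y; auto. }
  split; [exact Hn|]. intros [_ [N0 HN0]].
  destruct (Hx N0) as [y [[Hy Hy_not_iso] Ha]].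
  assert (Eyx : forall w, y w = x w) by (intro w; exact (HN0 y Hy Ha w)).
  apply Hy_not_iso. split; [exact Hy|]. exists N0. intros z Hz Hyz w.
  assert (Hxz : agree_box N0 x z) by (intros i j Hi Hj; rewrite <- Eyx; apply Hyz; auto).
  rewrite (HN0 z Hz Hxz w). symmetry. apply Eyx.
Qed.

Lemma not_isolated_of_approx {A : Type} (Y : config A -> Prop) (x : config A) :
  (forall N, exists y, Y y /\ agree_box N x y /\ exists w, y w <> x w) -> ~ isolated Y x.
Proof.
  intros Happ [_ [N HN]]. destruct (Happ N) as [y [Hy [Ha [w Hw]]]].
  exact (Hw (HN y Hy Ha w)).
Qed.

Lemma box_limit {A : Type} (z : nat -> config A) (r : nat -> Z) :
  (forall k, Z.of_nat k <= r k) -> (forall k, r k <= r (S k)) ->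
  (forall k, agree_box (r k) (z k) (z (S k))) ->
  exists l, forall k, agree_box (r k) l (z k).
Proof.
  intros Hr Hmono Hstep.
  assert (Hle : forall k m, (k <= m)%nat -> r k <= r m).
  { intros k m Hkm; induction Hkm; [lia|]. specialize (Hmono m); lia. }
  assert (Hag : forall k m, (k <= m)%nat -> agree_box (r k) (z k) (z m)).
  { intros k m Hkm; induction Hkm as [|m Hkm IH]; [intros i j _ _; reflexivity|].
    apply agree_box_trans with (z m); [exact IH|].
    apply agree_box_mono with (r m); [apply Hle; exact Hkm | apply Hstep]. }
  exists (fun w => z (Z.to_nat (Z.max (Z.abs (fst w)) (Z.abs (snd w)))) w).
  intros k i j Hi Hj; simpl.
  set (K := Z.to_nat (Z.max (Z.abs i) (Z.abs j))).
  destruct (Nat.le_ge_cases K k) as [Hk|Hk].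
  - apply (Hag K k Hk); pose proof (Hr K); unfold K in *; lia.
  - symmetry. apply (Hag k K Hk); auto.
Qed.

Section PerfectSets.
Context {A : Type} (Y : config A -> Prop) (f : nat -> config A).
Hypothesis Y_closed : closed_set Y.
Hypothesis Y_perfect : forall x, Y x -> ~ isolated Y x.

Definition stage : Type := ({z : config A | Y z} * Z)%type.

Definition escapes (s s' : stage) (k : nat) : Prop :=
  agree_box (snd s) (proj1_sig (fst s)) (proj1_sig (fst s')) /\ snd s + 1 <= snd s' /\
  exists w : Z * Z, Z.abs (fst w) <= snd s' /\ Z.abs (snd w) <= snd s' /\
                    proj1_sig (fst s') w <> f k w.

(* If the current point already differs from f k we keep it; otherwise, Y being
   perfect, a nearby point of Y differs from it, hence from f k. *)
Lemma escape_step (s : stage) (k : nat) : exists s' : stage, escapes s s' k.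
Proof.
  destruct s as [[z Hz] N]; unfold escapes; simpl.
  assert (Hmove : exists y, Y y /\ agree_box N z y /\ exists w, y w <> z w).
  { apply NNPP; intro Hc. apply (Y_perfect z Hz). split; [exact Hz|]. exists N.
    intros y Hy Ha w. apply NNPP; intro Hw. apply Hc. exists y; eauto. }
  destruct Hmove as [y [Hy [Ha [w Hw]]]].
  destruct (classic (exists w', z w' <> f k w')) as [[w' Hw']|Hsame].
  - exists (exist _ z Hz, Z.max (N + 1) (Z.max (Z.abs (fst w')) (Z.abs (snd w')))); simpl.
    split; [intros i j _ _; reflexivity|]. split; [lia|].
    exists w'; repeat split; auto; lia.
  - exists (exist _ y Hy, Z.max (N + 1) (Z.max (Z.abs (fst w)) (Z.abs (snd w)))); simpl.
    split; [exact Ha|]. split; [lia|].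
    exists w; repeat split; try lia.
    intro E. apply Hsame. exists w. rewrite <- E. auto.
Qed.

Definition next_stage (s : stage) (k : nat) : stage :=
  proj1_sig (constructive_indefinite_description _ (escape_step s k)).

Fixpoint stages (s0 : stage) (k : nat) : stage :=
  match k with O => s0 | S k' => next_stage (stages s0 k') k' end.

(* Diagonal argument: the limit of the stages differs from every f k. *)
Lemma perfect_not_enumerated :
  (exists x, Y x) -> ~ (forall x, Y x -> exists k, forall w, f k w = x w).
Proof.
  intros [x0 Hx0] Henum.
  set (s := stages (exist _ x0 Hx0, 0)).
  assert (Hspec : forall k, escapes (s k) (s (S k)) k).
  { intro k. exact (proj2_sig (constructive_indefinite_description _ (escape_step (s k) k))). }
  assert (Hr : forall k, Z.of_nat k <= snd (s k)).
  { induction k as [|k IH]; [simpl; lia|]. destruct (Hspec k) as [_ [H _]]. lia. }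
  assert (Hmono : forall k, snd (s k) <= snd (s (S k))).
  { intro k. destruct (Hspec k) as [_ [H _]]. lia. }
  destruct (box_limit (fun k => proj1_sig (fst (s k))) (fun k => snd (s k)) Hr Hmono
              (fun k => proj1 (Hspec k))) as [l Hl].
  assert (Hl_in : Y l).
  { apply Y_closed. intro N. exists (proj1_sig (fst (s (Z.to_nat N)))).
    split; [exact (proj2_sig (fst (s (Z.to_nat N))))|].
    apply agree_box_mono with (snd (s (Z.to_nat N))); [pose proof (Hr (Z.to_nat N)); lia | apply Hl]. }
  destruct (Henum l Hl_in) as [k Hk].
  destruct (Hspec k) as [_ [_ [[wi wj] [Hwi [Hwj Hw]]]]].
  apply Hw. rewrite Hk. symmetry. apply (Hl (S k)); assumption.
Qed.
End PerfectSets.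

Lemma perfect_not_countable {A : Type} (Y : config A -> Prop) :
  closed_set Y -> (forall x, Y x -> ~ isolated Y x) -> (exists x, Y x) -> ~ countable_set Y.
Proof. intros Hcl Hperf Hne [f Hf]. exact (perfect_not_enumerated Y f Hcl Hperf Hne Hf). Qed.

Lemma derivatives_never_stabilize {A : Type} (Y : config A -> Prop) :
  closed_set Y -> countable_set Y -> (forall n, exists x, deriv Y n x) ->
  forall n, ~ (forall x, deriv Y n x <-> deriv Y (S n) x).
Proof.
  intros Hcl [f Hf] Hne n Hstat.
  apply (perfect_not_countable (deriv Y n)).
  - apply deriv_closed; exact Hcl.
  - intros x Hx. apply Hstat in Hx. exact (proj2 Hx).
  - apply Hne.
  - exists f. intros x Hx. apply Hf. exact (deriv_incl Y n x Hx).
Qed.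

Lemma Z_ind_up (P : Z -> Prop) (a : Z) :
  P a -> (forall y, a <= y -> P y -> P (y + 1)) -> forall y, a <= y -> P y.
Proof.
  intros H0 HS y Hy. replace y with (a + Z.of_nat (Z.to_nat (y - a))) by lia.
  induction (Z.to_nat (y - a)) as [|n IH]; [rewrite Z.add_0_r; exact H0|].
  replace (a + Z.of_nat (S n)) with (a + Z.of_nat n + 1) by lia.
  apply HS; [lia | exact IH].
Qed.

Lemma Z_ind_down (P : Z -> Prop) (a : Z) :
  P a -> (forall y, y <= a -> P y -> P (y - 1)) -> forall y, y <= a -> P y.
Proof.
  intros H0 HS y Hy. replace y with (a - Z.of_nat (Z.to_nat (a - y))) by lia.
  induction (Z.to_nat (a - y)) as [|n IH]; [rewrite Z.sub_0_r; exact H0|].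
  replace (a - Z.of_nat (S n)) with (a - Z.of_nat n - 1) by lia.
  apply HS; [lia | exact IH].
Qed.

Lemma least_above (Q : Z -> Prop) (p : Z) : (exists q, p < q /\ Q q) ->
  exists q0, p < q0 /\ Q q0 /\ forall q, p < q -> q < q0 -> ~ Q q.
Proof.
  intros [q [Hpq HQ]].
  assert (H : forall n q, (Z.to_nat (q - p) <= n)%nat -> p < q -> Q q ->
    exists q0, p < q0 /\ Q q0 /\ forall q', p < q' -> q' < q0 -> ~ Q q').
  { induction n as [|n IH]; intros q1 Hn Hpq1 HQ1; [lia|].
    destruct (classic (exists q', p < q' /\ q' < q1 /\ Q q')) as [[q' [H1 [H2 H3]]]|Hno].
    - apply (IH q'); auto; lia.
    - exists q1. repeat split; auto. intros q' H1 H2 H3. apply Hno; eauto. }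
  exact (H _ q (le_n _) Hpq HQ).
Qed.

Lemma greatest_below (Q : Z -> Prop) (q : Z) : (exists p, p < q /\ Q p) ->
  exists p0, p0 < q /\ Q p0 /\ forall p, p0 < p -> p < q -> ~ Q p.
Proof.
  intros [p [Hpq HQ]].
  destruct (least_above (fun z => Q (- z)) (- q)) as [z [Hz [HQz Hmin]]].
  { exists (- p). rewrite Z.opp_involutive. split; [lia | exact HQ]. }
  exists (- z). repeat split; [lia | exact HQz|].
  intros p' H1 H2 HQ'. apply (Hmin (- p')); [lia | lia | rewrite Z.opp_involutive; exact HQ'].
Qed.

Lemma greatest_element (Q : Z -> Prop) (b : Z) :
  (exists p, Q p) -> (forall p, Q p -> p <= b) -> exists m, Q m /\ forall p, Q p -> p <= m.
Proof.
  intros [p HQ] Hb.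
  destruct (greatest_below Q (b + 1)) as [m [_ [HQm Hmax]]].
  { exists p. split; [specialize (Hb p HQ); lia | exact HQ]. }
  exists m. split; [exact HQm|]. intros p' HQ'.
  destruct (Z.le_gt_cases p' m) as [Hle|Hgt]; [exact Hle|].
  exfalso. apply (Hmax p' Hgt); [specialize (Hb p' HQ'); lia | exact HQ'].
Qed.

Definition finite_set {T : Type} (S : T -> Prop) : Prop := exists l : list T, forall t, S t -> In t l.

Fixpoint zrange (a : Z) (n : nat) : list Z :=
  match n with O => [] | S n' => a :: zrange (a + 1) n' end.

Lemma zrange_in (n : nat) : forall a z, a <= z < a + Z.of_nat n -> In z (zrange a n).
Proof.
  induction n as [|n IH]; intros a z H; simpl in *; [lia|].
  destruct (Z.eq_dec a z); [left; assumption | right; apply IH; lia].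
Qed.

Lemma box_finite (a b c d : Z) : finite_set (fun p : Z * Z => a <= fst p <= b /\ c <= snd p <= d).
Proof.
  exists (list_prod (zrange a (Z.to_nat (b - a + 1))) (zrange c (Z.to_nat (d - c + 1)))).
  intros [i j] [H1 H2]; simpl in *. apply in_prod; apply zrange_in; lia.
Qed.

Lemma finite_union {T : Type} (S1 S2 : T -> Prop) :
  finite_set S1 -> finite_set S2 -> finite_set (fun t => S1 t \/ S2 t).
Proof. intros [l1 H1] [l2 H2]. exists (l1 ++ l2). intros t [H|H]; apply in_or_app; auto. Qed.

Lemma finite_subset {T : Type} (S1 S2 : T -> Prop) :
  finite_set S2 -> (forall t, S1 t -> S2 t) -> finite_set S1.
Proof. intros [l H] Hs. exists l. auto. Qed.

Lemma finite_subsingleton {T : Type} (S : T -> Prop) :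
  (forall t t', S t -> S t' -> t = t') -> finite_set S.
Proof.
  intros H. destruct (classic (exists t, S t)) as [[t Ht]|Hn].
  - exists [t]. intros t' Ht'. left. apply H; assumption.
  - exists []. intros t Ht. apply Hn; eauto.
Qed.

(* A typical configuration consists of finitely many "blocks" standing
   on a horizon row; block j has a leg column, a right triangle to its right bounded
   by a diagonal, an apex row at height S_j and a mark row at height M_j, and
   consecutive blocks satisfy S_(j+1) = S_j + 1 and M_(j+1) = M_j - 1.
   - B: below the horizon.
   - Horizon row: Hl (left of all legs), F (foot of a leg), Hb (base of a triangle),
     Be (end of a triangle base), Hg (gap after a triangle).
   - Om: above the apex rows, and left of the first leg.
   - Right of a diagonal: La (below the mark row), Mg (mark row), Up (between mark and
     apex rows), Ar (apex row).
   - Inside a triangle: Tl / Mt / Tu (below / on / above the mark row); on its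
     diagonal: HL / HX / HU likewise.
   - Leg column: LLla / LLom below the mark, LMla / LMom on it, LUom / LUup above it,
     LUaM just above it (meeting the previous mark row), LUaA just below the apex
     (meeting the previous apex row), and Apex on top.  The suffix la / om records
     whether the region west of the leg is La-like or Om (first leg). *)
Inductive sym : Type :=
  B | Hl | F | Hb | Be | Hg | Om | La | Up | Tl | Tu | Ar | Apex | Mt | Mg | HL | HU | HX
| LLla | LLom | LMla | LMom | LUaM | LUup | LUaA | LUom.

Scheme Equality for sym.

Definition syms : list sym :=
  [B; Hl; F; Hb; Be; Hg; Om; La; Up; Tl; Tu; Ar; Apex; Mt; Mg; HL; HU; HX;
   LLla; LLom; LMla; LMom; LUaM; LUup; LUaA; LUom].

Lemma syms_complete (s : sym) : In s syms.
Proof. destruct s; simpl; tauto. Qed.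

Lemma sym_beq_iff (a b : sym) : sym_beq a b = true <-> a = b.
Proof. split; [apply internal_sym_dec_bl | apply internal_sym_dec_lb]. Qed.

Lemma sym_beq_refl (s : sym) : sym_beq s s = true.
Proof. apply sym_beq_iff; reflexivity. Qed.

(* A 2x2 tile (bottom-left, bottom-right, top-left, top-right). *)
Definition tile : Type := (sym * sym * sym * sym)%type.

(* The allowed 2x2 tiles; every other 2x2 pattern is forbidden. *)
Definition tiles : list tile := [
  (B,B,B,B); (B,B,Hl,Hl); (B,B,Hl,F); (B,B,F,Hb);
  (B,B,Hb,Hb); (B,B,Hb,Be); (B,B,Be,Hg); (B,B,Hg,F);
  (B,B,Hg,Hg); (Hl,Hl,Om,Om); (Hl,F,Om,LLom); (Hl,F,Om,LMom);
  (F,Hb,LLla,Tl); (F,Hb,LLom,Tl); (F,Hb,LMla,Mt); (F,Hb,LMom,Mt);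
  (Hb,Hb,Tl,Tl); (Hb,Hb,Tl,HL); (Hb,Hb,Mt,Mt); (Hb,Hb,Mt,HX);
  (Hb,Be,HL,La); (Hb,Be,HX,Mg); (Be,Hg,La,La); (Be,Hg,Mg,Mg);
  (Hg,F,La,LLla); (Hg,F,La,LMla); (Hg,Hg,La,La); (Hg,Hg,Mg,Mg);
  (Om,Om,Om,Om); (Om,Apex,Om,Om); (Om,LLom,Om,LLom); (Om,LLom,Om,LMom);
  (Om,LMom,Om,LUom); (Om,LUom,Om,Apex); (Om,LUom,Om,LUom); (La,La,La,La);
  (La,La,Mg,Mg); (La,LLla,La,LLla); (La,LLla,La,LMla); (La,LMla,Mg,LUaM);
  (Up,Up,Up,Up); (Up,Up,Ar,Ar); (Up,LUup,Up,LUup); (Up,LUup,Ar,LUaA);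
  (Tl,Tl,Tl,Tl); (Tl,Tl,Tl,HL); (Tl,Tl,Mt,Mt); (Tl,Tl,Mt,HX);
  (Tl,HL,HL,La); (Tl,HL,HX,Mg); (Tu,Tu,Tu,Tu); (Tu,Tu,Tu,HU);
  (Tu,HU,HU,Up); (Ar,Ar,Om,Om); (Ar,LUaA,Om,Apex); (Apex,Ar,Om,Om);
  (Mt,Mt,Tu,Tu); (Mt,Mt,Tu,HU); (Mt,HX,HU,Up); (Mg,Mg,Up,Up);
  (Mg,LUaM,Up,LUup); (HL,La,La,La); (HL,La,Mg,Mg); (HU,Up,Up,Up);
  (HU,Up,Ar,Ar); (HX,Mg,Up,Up); (LLla,Tl,LLla,Tl); (LLla,Tl,LMla,Mt);
  (LLom,Tl,LLom,Tl); (LLom,Tl,LMom,Mt); (LMla,Mt,LUaM,Tu); (LMom,Mt,LUom,Tu);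
  (LMom,Mt,LUom,HU); (LUaM,Tu,LUup,Tu); (LUup,Tu,LUup,Tu); (LUup,Tu,LUaA,HU);
  (LUaA,HU,Apex,Ar); (LUom,Tu,LUom,Tu); (LUom,Tu,LUom,HU); (LUom,HU,Apex,Ar)].

Definition tile_beq (w1 w2 : tile) : bool :=
  match w1, w2 with (a, b, c, d), (a', b', c', d') =>
    sym_beq a a' && sym_beq b b' && sym_beq c c' && sym_beq d d' end.

Lemma tile_beq_iff (w1 w2 : tile) : tile_beq w1 w2 = true <-> w1 = w2.
Proof.
  destruct w1 as [[[a b] c] d], w2 as [[[a' b'] c'] d']; unfold tile_beq.
  rewrite !andb_true_iff, !sym_beq_iff. split.
  - intros [[[-> ->] ->] ->]; reflexivity.
  - intro E; inversion E; auto.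
Qed.

Definition allowed (w : tile) : bool := existsb (tile_beq w) tiles.

Lemma allowed_iff (w : tile) : allowed w = true <-> In w tiles.
Proof.
  unfold allowed; rewrite existsb_exists; split.
  - intros [w' [H1 H2]]. apply tile_beq_iff in H2; subst; exact H1.
  - intro H; exists w; split; [exact H | apply tile_beq_iff; reflexivity].
Qed.

Definition window (x : config sym) (v : Z * Z) : tile :=
  let (i, j) := v in (x (i, j), x (i + 1, j), x (i, j + 1), x (i + 1, j + 1)).

Definition valid (x : config sym) : Prop := forall i j, allowed (window x (i, j)) = true.

Lemma valid_window (x : config sym) (i j : Z) : valid x -> In (window x (i, j)) tiles.
Proof. intro Hv. apply allowed_iff, Hv. Qed.

Definition tile_pattern (w : tile) : pattern sym :=
  match w with (a, b, c, d) =>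
    Pattern sym [(0, 0); (1, 0); (0, 1); (1, 1)]
      (fun u => if Z.eqb (fst u) 0 then (if Z.eqb (snd u) 0 then a else c)
                else (if Z.eqb (snd u) 0 then b else d)) end.

Definition all_tiles : list tile := list_prod (list_prod (list_prod syms syms) syms) syms.

Lemma all_tiles_complete (w : tile) : In w all_tiles.
Proof. destruct w as [[[a b] c] d]; unfold all_tiles; repeat apply in_prod; apply syms_complete. Qed.

Lemma occurs_tile_pattern (x : config sym) (w : tile) (i j : Z) :
  occurs x (tile_pattern w) (i, j) <-> window x (i, j) = w.
Proof.
  destruct w as [[[a b] c] d]; unfold occurs, tile_pattern, window; simpl; split.
  - intro H.
    pose proof (H (0, 0) ltac:(simpl; auto)) as H1. pose proof (H (1, 0) ltac:(simpl; auto)) as H2.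
    pose proof (H (0, 1) ltac:(simpl; auto)) as H3. pose proof (H (1, 1) ltac:(simpl; auto)) as H4.
    simpl in *. rewrite !Z.add_0_r in *. rewrite H1, H2, H3, H4. reflexivity.
  - intros H u Hu. inversion H; subst.
    destruct Hu as [<-|[<-|[<-|[<-|[]]]]]; simpl; rewrite ?Z.add_0_r; reflexivity.
Qed.

Definition forbidden : list (pattern sym) :=
  map tile_pattern (filter (fun w => negb (allowed w)) all_tiles).

Lemma SFT_valid (x : config sym) : SFT forbidden x <-> valid x.
Proof.
  unfold SFT, forbidden, valid; split.
  - intros H i j. destruct (allowed (window x (i, j))) eqn:E; [reflexivity|].
    exfalso. apply (H (tile_pattern (window x (i, j)))) with (v := (i, j)).
    + apply in_map, filter_In. rewrite E. split; [apply all_tiles_complete | reflexivity].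
    + apply occurs_tile_pattern; reflexivity.
  - intros H p Hp [i j] Hocc.
    apply in_map_iff in Hp. destruct Hp as [w [<- Hw]]. apply filter_In in Hw.
    apply occurs_tile_pattern in Hocc. rewrite <- Hocc, H in Hw. discriminate (proj2 Hw).
Qed.

Lemma sym_finite : finite_type sym.
Proof. exists syms. apply syms_complete. Qed.

Lemma SFT_closed : closed_set (SFT forbidden).
Proof.
  intros x Hx. apply SFT_valid. intros i j.
  destruct (Hx (Z.abs i + Z.abs j + 1)) as [y [Hy Ha]]. apply SFT_valid in Hy.
  unfold window. rewrite !Ha by lia. apply Hy.
Qed.

Definition is_horizon (s : sym) : bool := match s with Hl | F | Hb | Be | Hg => true | _ => false end.
Definition is_leg (s : sym) : bool :=
  match s with LLla | LLom | LMla | LMom | LUaM | LUup | LUaA | LUom => true | _ => false end.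
Definition is_leg_low (s : sym) : bool := match s with LLla | LLom => true | _ => false end.
Definition is_leg_mark (s : sym) : bool := match s with LMla | LMom => true | _ => false end.
Definition is_leg_up (s : sym) : bool := match s with LUaM | LUup | LUaA | LUom => true | _ => false end.
Definition is_inside (s : sym) : bool := match s with Tl | Mt | Tu => true | _ => false end.
Definition is_diag (s : sym) : bool := match s with HL | HU | HX => true | _ => false end.
Definition leg_part (s : sym) : bool := is_leg s || sym_beq s F || sym_beq s Apex.
(* Symbols whose western neighbour is not determined by the local rules. *)
Definition west_event (s : sym) : bool := leg_part s || sym_beq s Be.

(* Necessary conditions on horizontally adjacent symbols (a west of b), ... *)
Definition horiz_ok (a b : sym) : bool :=
  Bool.eqb (is_horizon a) (is_horizon b)
  && implb (sym_beq a Apex) (sym_beq b Ar)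
  && implb (sym_beq a Ar) (sym_beq b Ar || sym_beq b LUaA)
  && implb (is_leg_mark a) (sym_beq b Mt || sym_beq b HX)
  && implb (sym_beq a Mt) (sym_beq b Mt || sym_beq b HX)
  && implb (sym_beq a HX) (sym_beq b Mg)
  && implb (sym_beq a Mg) (sym_beq b Mg || sym_beq b LUaM)
  && implb (is_leg a) (is_inside b || is_diag b)
  && implb (is_inside a) (is_inside b || is_diag b)
  && implb (sym_beq a Be || sym_beq a Hg) (sym_beq b Hg || sym_beq b F)
  && implb (sym_beq b Be) (sym_beq a Hb).

(* ... on vertically adjacent symbols (a below c), ... *)
Definition vert_ok (a c : sym) : bool :=
  implb (is_horizon c) (sym_beq a B)
  && implb (sym_beq c B) (sym_beq a B)
  && implb (is_leg c) (is_leg a || sym_beq a F)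
  && implb (sym_beq a F) (is_leg_low c || is_leg_mark c)
  && implb (is_leg a) (is_leg c || sym_beq c Apex)
  && implb (sym_beq a Apex || sym_beq a Om) (sym_beq c Om)
  && implb (sym_beq c Apex) (is_leg_mark a || is_leg_up a)
  && implb (is_leg_low a) (is_leg_low c || is_leg_mark c)
  && implb (sym_beq a LUaA) (sym_beq c Apex)
  && implb (sym_beq c LUaM) (sym_beq a LMla).

(* ... and on the anti-diagonal pairs (tl above-left of br) of a tile. *)
Definition diag_ok (tl br : sym) : bool :=
  implb (is_diag br) (is_diag tl || sym_beq tl Apex)
  && implb (sym_beq tl Apex) (is_diag br)
  && implb (is_diag tl) (is_diag br || sym_beq br Be).

Lemma tiles_ok : forallb (fun w => match w with (a, b, c, _) =>
  horiz_ok a b && vert_ok a c && diag_ok c b end) tiles = true.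
Proof. vm_compute. reflexivity. Qed.

Lemma valid_ok (x : config sym) (i j : Z) : valid x ->
  (horiz_ok (x (i, j)) (x (i + 1, j)) = true /\ vert_ok (x (i, j)) (x (i, j + 1)) = true) /\
  diag_ok (x (i, j + 1)) (x (i + 1, j)) = true.
Proof.
  intro Hv. pose proof (proj1 (forallb_forall _ tiles) tiles_ok _ (valid_window x i j Hv)) as H.
  simpl in H. rewrite !andb_true_iff in H. exact H.
Qed.

(* Case analysis on the two symbols of an adjacent pair, keeping the combinations
   that the corresponding condition allows; used to read off the local rules below. *)
Ltac close_rule := simpl; first [ reflexivity | (left; reflexivity) | (right; reflexivity)
  | (right; right; reflexivity) | (split; [reflexivity | discriminate]) | discriminate | tauto ].

Ltac horiz_cases x i j Hv := let R := fresh "R" in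
  pose proof (proj1 (proj1 (valid_ok x i j Hv))) as R;
  destruct (x (i, j)); try discriminate; destruct (x (i + 1, j)); simpl in R; try discriminate; try close_rule.
Ltac vert_cases x i j Hv := let R := fresh "R" in
  pose proof (proj2 (proj1 (valid_ok x i j Hv))) as R;
  destruct (x (i, j)); try discriminate; destruct (x (i, j + 1)); simpl in R; try discriminate; try close_rule.
Ltac diag_cases x i j Hv := let R := fresh "R" in
  pose proof (proj2 (valid_ok x i j Hv)) as R;
  destruct (x (i, j + 1)); try discriminate; destruct (x (i + 1, j)); simpl in R; try discriminate; try close_rule.

Section LocalRules.
Variable x : config sym.
Hypothesis Hv : valid x.

Lemma horizon_east (i j : Z) : is_horizon (x (i, j)) = is_horizon (x (i + 1, j)).
Proof. horiz_cases x i j Hv. Qed.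
Lemma Apex_east (i j : Z) : x (i, j) = Apex -> x (i + 1, j) = Ar.
Proof. intro H. horiz_cases x i j Hv. Qed.
Lemma Ar_east (i j : Z) : x (i, j) = Ar -> x (i + 1, j) = Ar \/ x (i + 1, j) = LUaA.
Proof. intro H. horiz_cases x i j Hv. Qed.
Lemma leg_mark_east (i j : Z) : is_leg_mark (x (i, j)) = true -> x (i + 1, j) = Mt \/ x (i + 1, j) = HX.
Proof. intro H. horiz_cases x i j Hv. Qed.
Lemma Mt_east (i j : Z) : x (i, j) = Mt -> x (i + 1, j) = Mt \/ x (i + 1, j) = HX.
Proof. intro H. horiz_cases x i j Hv. Qed.
Lemma HX_east (i j : Z) : x (i, j) = HX -> x (i + 1, j) = Mg.
Proof. intro H. horiz_cases x i j Hv. Qed.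
Lemma Mg_east (i j : Z) : x (i, j) = Mg -> x (i + 1, j) = Mg \/ x (i + 1, j) = LUaM.
Proof. intro H. horiz_cases x i j Hv. Qed.
Lemma leg_east (i j : Z) : is_leg (x (i, j)) = true -> is_inside (x (i + 1, j)) || is_diag (x (i + 1, j)) = true.
Proof. intro H. horiz_cases x i j Hv. Qed.
Lemma inside_east (i j : Z) : is_inside (x (i, j)) = true -> is_inside (x (i + 1, j)) || is_diag (x (i + 1, j)) = true.
Proof. intro H. horiz_cases x i j Hv. Qed.
Lemma base_end_east (i j : Z) : x (i, j) = Be \/ x (i, j) = Hg -> x (i + 1, j) = Hg \/ x (i + 1, j) = F.
Proof. intros [H|H]; horiz_cases x i j Hv. Qed.
Lemma Be_west (i j : Z) : x (i + 1, j) = Be -> x (i, j) = Hb.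
Proof. intro H. horiz_cases x i j Hv. Qed.

Lemma horizon_below (i j : Z) : is_horizon (x (i, j + 1)) = true -> x (i, j) = B.
Proof. intro H. vert_cases x i j Hv. Qed.
Lemma B_below (i j : Z) : x (i, j + 1) = B -> x (i, j) = B.
Proof. intro H. vert_cases x i j Hv. Qed.
Lemma leg_below (i j : Z) : is_leg (x (i, j + 1)) = true -> is_leg (x (i, j)) = true \/ x (i, j) = F.
Proof. intro H. vert_cases x i j Hv. Qed.
Lemma F_above (i j : Z) : x (i, j) = F -> is_leg_low (x (i, j + 1)) || is_leg_mark (x (i, j + 1)) = true.
Proof. intro H. vert_cases x i j Hv. Qed.
Lemma leg_above (i j : Z) : is_leg (x (i, j)) = true -> is_leg (x (i, j + 1)) = true \/ x (i, j + 1) = Apex.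
Proof. intro H. vert_cases x i j Hv. Qed.
Lemma Om_above (i j : Z) : x (i, j) = Apex \/ x (i, j) = Om -> x (i, j + 1) = Om.
Proof. intros [H|H]; vert_cases x i j Hv. Qed.
Lemma Apex_below (i j : Z) : x (i, j + 1) = Apex -> is_leg_mark (x (i, j)) || is_leg_up (x (i, j)) = true.
Proof. intro H. vert_cases x i j Hv. Qed.
Lemma leg_low_above (i j : Z) : is_leg_low (x (i, j)) = true -> is_leg_low (x (i, j + 1)) || is_leg_mark (x (i, j + 1)) = true.
Proof. intro H. vert_cases x i j Hv. Qed.
Lemma LUaA_above (i j : Z) : x (i, j) = LUaA -> x (i, j + 1) = Apex.
Proof. intro H. vert_cases x i j Hv. Qed.
Lemma LUaM_below (i j : Z) : x (i, j + 1) = LUaM -> x (i, j) = LMla.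
Proof. intro H. vert_cases x i j Hv. Qed.

Lemma diag_up (i j : Z) : is_diag (x (i + 1, j)) = true -> is_diag (x (i, j + 1)) = true \/ x (i, j + 1) = Apex.
Proof. intro H. diag_cases x i j Hv. Qed.
Lemma Apex_diag_down (i j : Z) : x (i, j + 1) = Apex -> is_diag (x (i + 1, j)) = true.
Proof. intro H. diag_cases x i j Hv. Qed.
Lemma diag_down (i j : Z) : is_diag (x (i, j + 1)) = true -> is_diag (x (i + 1, j)) = true \/ x (i + 1, j) = Be.
Proof. intro H. diag_cases x i j Hv. Qed.
End LocalRules.

Definition leg_column (x : config sym) (p : Z) : Prop := exists y, leg_part (x (p, y)) = true.
Definition horizon_at (x : config sym) (h : Z) : Prop := exists i, is_horizon (x (i, h)) = true.

Section Columns.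
Variable x : config sym.
Hypothesis Hv : valid x.

Lemma leg_column_up (p y0 : Z) : is_leg (x (p, y0)) = true \/ x (p, y0) = Apex \/ x (p, y0) = Om ->
  forall y, y0 <= y -> is_leg (x (p, y)) = true \/ x (p, y) = Apex \/ x (p, y) = Om.
Proof.
  intros H0. apply Z_ind_up; [exact H0|].
  intros z _ [H|[H|H]].
  - destruct (leg_above x Hv p z H); auto.
  - right; right. apply (Om_above x Hv p z); auto.
  - right; right. apply (Om_above x Hv p z); auto.
Qed.

Lemma Om_up (p s : Z) : x (p, s) = Apex \/ x (p, s) = Om -> forall y, s < y -> x (p, y) = Om.
Proof.
  intros H y Hy. apply (Z_ind_up (fun y => x (p, y) = Om) (s + 1)); try lia.
  - apply (Om_above x Hv p s H).
  - intros z _ Hz. apply (Om_above x Hv p z); auto.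
Qed.

Lemma apex_unique (p s s' : Z) : x (p, s) = Apex -> x (p, s') = Apex -> s = s'.
Proof.
  intros H1 H2. destruct (Z.lt_total s s') as [Hl|[He|Hl]]; auto.
  - rewrite (Om_up p s (or_introl H1) s' Hl) in H2; discriminate.
  - rewrite (Om_up p s' (or_introl H2) s Hl) in H1; discriminate.
Qed.

Lemma B_down (i y0 : Z) : x (i, y0) = B -> forall y, y <= y0 -> x (i, y) = B.
Proof.
  intro H0. apply (Z_ind_down (fun y => x (i, y) = B) y0 H0).
  intros y _ Hy. apply (B_below x Hv). replace (y - 1 + 1) with y by lia. exact Hy.
Qed.

(* If column p carries leg symbols at all heights above lo, then every column to its
   right carries triangle-interior symbols there: a diagonal symbol would have to
   continue up-left into column p, which holds no diagonal symbol or apex. *)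
Lemma inside_right_of_leg (p lo : Z) : (forall y, lo < y -> is_leg (x (p, y)) = true) ->
  forall z, p + 1 <= z -> forall y, lo < y -> is_inside (x (z, y)) = true.
Proof.
  intros Hleg.
  assert (Hstep : forall z, (forall y, lo < y -> is_leg (x (z, y)) || is_inside (x (z, y)) = true) ->
                  forall y, lo < y -> is_inside (x (z + 1, y)) = true).
  { intros z Hz y Hy.
    assert (He : is_inside (x (z + 1, y)) || is_diag (x (z + 1, y)) = true).
    { specialize (Hz y Hy). apply orb_true_iff in Hz. destruct Hz as [H|H];
        [apply (leg_east x Hv z y H) | apply (inside_east x Hv z y H)]. }
    destruct (is_inside (x (z + 1, y))) eqn:E; [reflexivity|]. simpl in He.
    specialize (Hz (y + 1) ltac:(lia)).
    destruct (diag_up x Hv z y He) as [H|H]; [|rewrite H in Hz; discriminate].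
    destruct (x (z, y + 1)); simpl in *; discriminate. }
  apply (Z_ind_up (fun z => forall y, lo < y -> is_inside (x (z, y)) = true)).
  - apply Hstep. intros y Hy. rewrite (Hleg y Hy). reflexivity.
  - intros z _ IH. apply Hstep. intros y Hy. rewrite (IH y Hy). apply orb_true_r.
Qed.

End Columns.

Section Horizon.
Variable x : config sym.
Hypothesis Hv : valid x.
Variable h : Z.
Hypothesis Hh : horizon_at x h.

Lemma horizon_row_full (i : Z) : is_horizon (x (i, h)) = true.
Proof.
  destruct Hh as [i0 H0]. destruct (Z.le_gt_cases i0 i) as [Hi|Hi].
  - apply (Z_ind_up (fun i => is_horizon (x (i, h)) = true) i0); auto.
    intros y _ Hy. rewrite <- (horizon_east x Hv y h). exact Hy.
  - apply (Z_ind_down (fun i => is_horizon (x (i, h)) = true) i0); auto; try lia.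
    intros y _ Hy. rewrite (horizon_east x Hv (y - 1) h). replace (y - 1 + 1) with y by lia. exact Hy.
Qed.

Lemma below_horizon (i y : Z) : y < h -> x (i, y) = B.
Proof.
  intro Hy. apply (B_down x Hv i (h - 1)); [|lia].
  apply (horizon_below x Hv). replace (h - 1 + 1) with h by lia. apply horizon_row_full.
Qed.

Lemma horizon_unique (i j : Z) : is_horizon (x (i, j)) = true -> j = h.
Proof.
  intros H. destruct (Z.lt_total j h) as [Hl|[He|Hl]]; auto.
  - rewrite (below_horizon i j Hl) in H; discriminate.
  - assert (HB : x (i, j - 1) = B).
    { apply (horizon_below x Hv). replace (j - 1 + 1) with j by lia. exact H. }
    pose proof (horizon_row_full i) as Hi.
    rewrite (B_down x Hv i (j - 1) HB h ltac:(lia)) in Hi. discriminate.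
Qed.

Lemma leg_foot (p : Z) : leg_column x p -> x (p, h) = F.
Proof.
  intros [y Hy].
  assert (Hdown : forall y', h < y' -> is_leg (x (p, y')) = true \/ x (p, y') = Apex ->
                  is_leg (x (p, y' - 1)) = true \/ x (p, y' - 1) = F).
  { intros y' Hy' [HL|HA].
    - apply (leg_below x Hv). replace (y' - 1 + 1) with y' by lia. exact HL.
    - left. pose proof (Apex_below x Hv p (y' - 1) ltac:(replace (y' - 1 + 1) with y' by lia; exact HA)) as H.
      destruct (x (p, y' - 1)); simpl in H; try discriminate; reflexivity. }
  destruct (Z.lt_total y h) as [Hlt|[Heq|Hgt]].
  - rewrite (below_horizon p y Hlt) in Hy. discriminate.
  - subst y. pose proof (horizon_row_full p) as H.
    destruct (x (p, h)); simpl in Hy, H; try discriminate; reflexivity.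
  - assert (Hleg : forall y', h < y' <= y -> is_leg (x (p, y')) = true \/ x (p, y') = Apex).
    { intros y' Hy'.
      apply (Z_ind_down (fun y' => h < y' -> is_leg (x (p, y')) = true \/ x (p, y') = Apex) y); try lia.
      - intros _. destruct (is_horizon (x (p, y))) eqn:E.
        + pose proof (horizon_unique p y E); lia.
        + destruct (x (p, y)); simpl in Hy, E; try discriminate; auto.
      - intros z Hz IH Hz'. destruct (Hdown z ltac:(lia) (IH ltac:(lia))) as [H|H]; [left; exact H|].
        pose proof (horizon_unique p (z - 1) ltac:(rewrite H; reflexivity)). lia. }
    destruct (Hdown (h + 1) ltac:(lia) (Hleg (h + 1) ltac:(lia))) as [H|H];
      replace (h + 1 - 1) with h in H by lia; [|exact H].
    pose proof (horizon_row_full p) as HH. destruct (x (p, h)); simpl in H, HH; discriminate.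
Qed.

Lemma above_horizon (i y : Z) : x (i, y) <> B -> is_horizon (x (i, y)) = false -> h < y.
Proof.
  intros HB HH. destruct (Z.lt_total h y) as [Hl|[He|Hl]]; auto.
  - rewrite <- He, horizon_row_full in HH. discriminate.
  - exfalso. exact (HB (below_horizon i y Hl)).
Qed.

Lemma above_foot (p : Z) : x (p, h) = F -> forall y, h < y ->
  is_leg (x (p, y)) = true \/ x (p, y) = Apex \/ x (p, y) = Om.
Proof.
  intros HF y Hy. apply (leg_column_up x Hv p (h + 1)); [|lia].
  left. pose proof (F_above x Hv p h HF) as H.
  destruct (x (p, h + 1)); simpl in H; try discriminate; reflexivity.
Qed.

Lemma above_foot_no_ray (q y : Z) : x (q, h) = F -> h < y ->
  x (q, y) <> Ar /\ x (q, y) <> Mt /\ x (q, y) <> HX /\ x (q, y) <> Mg.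
Proof.
  intros HF Hy. destruct (above_foot q HF y Hy) as [H|[H|H]];
    [destruct (x (q, y)); simpl in H; try discriminate | rewrite H | rewrite H];
    repeat split; discriminate.
Qed.

(* A leg column with another leg column to its right carries an apex: otherwise its
   leg symbols would force triangle-interior symbols above the foot to the right. *)
Lemma apex_of_leg_with_successor (p q : Z) : leg_column x p -> leg_column x q -> p < q ->
  exists s, h < s /\ x (p, s) = Apex.
Proof.
  intros Hp Hq Hpq. apply NNPP; intro Hno.
  assert (Hleg : forall y, h < y -> is_leg (x (p, y)) = true).
  { intros y Hy. apply (Z_ind_up (fun y => is_leg (x (p, y)) = true) (h + 1)); [| |lia].
    - pose proof (F_above x Hv p h (leg_foot p Hp)) as H.
      destruct (x (p, h + 1)); simpl in H; try discriminate; reflexivity.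
    - intros z Hz Hzl. destruct (leg_above x Hv p z Hzl) as [H|H]; [exact H|].
      exfalso; apply Hno; exists (z + 1); split; [lia | exact H]. }
  pose proof (inside_right_of_leg x Hv p h Hleg q ltac:(lia) (h + 1) ltac:(lia)) as Hin.
  pose proof (F_above x Hv q h (leg_foot q Hq)) as H.
  destruct (x (q, h + 1)); simpl in H, Hin; discriminate.
Qed.

Lemma apex_row_meets_next_leg (p q s : Z) : leg_column x p -> leg_column x q -> p < q ->
  (forall r, p < r < q -> ~ leg_column x r) -> x (p, s) = Apex -> x (q, s) = LUaA.
Proof.
  intros Hp Hq Hpq Hbetween HA.
  assert (Hray : forall z, p + 1 <= z -> z <= q -> x (z, s) = Ar \/ (x (z, s) = LUaA /\ z = q)).
  { apply (Z_ind_up (fun z => z <= q -> x (z, s) = Ar \/ (x (z, s) = LUaA /\ z = q)) (p + 1)).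
    - intros _. left. apply (Apex_east x Hv p s HA).
    - intros z Hz IH Hzq. destruct (IH ltac:(lia)) as [H1|[_ H2]]; [|lia].
      destruct (Ar_east x Hv z s H1) as [H3|H3]; [left; exact H3|].
      right; split; [exact H3|]. destruct (Z.eq_dec (z + 1) q) as [E|E]; [exact E|].
      exfalso. apply (Hbetween (z + 1)); [lia|]. exists s. rewrite H3; reflexivity. }
  destruct (Hray q ltac:(lia) ltac:(lia)) as [H1|[H1 _]]; [|exact H1].
  exfalso. assert (Hs : h < s) by (apply (above_horizon p s); rewrite HA; [discriminate | reflexivity]).
  pose proof (above_foot_no_ray q s (leg_foot q Hq) Hs). tauto.
Qed.

Lemma mark_below_apex (p s : Z) : x (p, h) = F -> x (p, s) = Apex ->
  exists m, h < m < s /\ is_leg_mark (x (p, m)) = true.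
Proof.
  intros HF HA. assert (Hs : h < s) by (apply (above_horizon p s); rewrite HA; [discriminate | reflexivity]).
  apply NNPP; intro Hno.
  assert (Hlow : forall y, h < y -> y < s -> is_leg_low (x (p, y)) = true).
  { intros y Hy. apply (Z_ind_up (fun y => y < s -> is_leg_low (x (p, y)) = true) (h + 1)); [| |lia].
    - intros Hs1. pose proof (F_above x Hv p h HF) as H.
      destruct (is_leg_low (x (p, h + 1))) eqn:E; [reflexivity|]. simpl in H.
      exfalso; apply Hno; exists (h + 1); split; [lia | exact H].
    - intros z Hz IH Hzs. pose proof (leg_low_above x Hv p z (IH ltac:(lia))) as H.
      destruct (is_leg_low (x (p, z + 1))) eqn:E; [reflexivity|]. simpl in H.
      exfalso; apply Hno; exists (z + 1); split; [lia | exact H]. }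
  destruct (Z.eq_dec s (h + 1)) as [E|E].
  - subst s. pose proof (F_above x Hv p h HF) as H. rewrite HA in H. discriminate.
  - pose proof (Hlow (s - 1) ltac:(lia) ltac:(lia)) as H1.
    pose proof (Apex_below x Hv p (s - 1) ltac:(replace (s - 1 + 1) with s by lia; exact HA)) as H2.
    destruct (x (p, s - 1)); simpl in H1, H2; discriminate.
Qed.

Lemma mark_row_meets_next_leg (p q m : Z) : leg_column x p -> leg_column x q -> p < q ->
  (forall r, p < r < q -> ~ leg_column x r) -> is_leg_mark (x (p, m)) = true -> h < m ->
  x (q, m) = LUaM.
Proof.
  intros Hp Hq Hpq Hbetween HM Hm.
  assert (Hray : forall z, p + 1 <= z -> z <= q ->
     x (z, m) = Mt \/ x (z, m) = HX \/ x (z, m) = Mg \/ (x (z, m) = LUaM /\ z = q)).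
  { apply (Z_ind_up (fun z => z <= q ->
      x (z, m) = Mt \/ x (z, m) = HX \/ x (z, m) = Mg \/ (x (z, m) = LUaM /\ z = q)) (p + 1)).
    - intros _. destruct (leg_mark_east x Hv p m HM); auto.
    - intros z Hz IH Hzq. destruct (IH ltac:(lia)) as [H1|[H1|[H1|[_ H2]]]]; [| | |lia].
      + destruct (Mt_east x Hv z m H1); auto.
      + right; right; left. apply (HX_east x Hv z m H1).
      + destruct (Mg_east x Hv z m H1) as [H3|H3]; [auto|].
        right; right; right; split; [exact H3|]. destruct (Z.eq_dec (z + 1) q) as [E|E]; [exact E|].
        exfalso. apply (Hbetween (z + 1)); [lia|]. exists m. rewrite H3; reflexivity. }
  destruct (Hray q ltac:(lia) ltac:(lia)) as [H1|[H1|[H1|[H1 _]]]]; [| | |exact H1];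
    exfalso; pose proof (above_foot_no_ray q m (leg_foot q Hq) Hm); tauto.
Qed.

(* Consequently marks strictly decrease from one leg to the next; since marks lie
   above the horizon, the legs to the right of a leg with a mark are bounded. *)
Lemma legs_right_bounded (n : nat) : forall p m, leg_column x p -> is_leg_mark (x (p, m)) = true ->
  h < m -> m - h <= Z.of_nat n -> exists b, forall q, leg_column x q -> p <= q -> q <= b.
Proof.
  induction n as [|n IH]; intros p m Hp HM Hm Hn; [lia|].
  destruct (classic (exists q, p < q /\ leg_column x q)) as [Hex|Hno].
  - destruct (least_above (leg_column x) p Hex) as [q0 [Hpq0 [Hq0 Hmin]]].
    pose proof (mark_row_meets_next_leg p q0 m Hp Hq0 Hpq0
                  (fun r Hr => Hmin r (proj1 Hr) (proj2 Hr)) HM Hm) as H4.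
    pose proof (LUaM_below x Hv q0 (m - 1) ltac:(replace (m - 1 + 1) with m by lia; exact H4)) as H5.
    assert (Hm1 : h < m - 1) by (apply (above_horizon q0 (m - 1)); rewrite H5; [discriminate | reflexivity]).
    destruct (IH q0 (m - 1) Hq0 ltac:(rewrite H5; reflexivity) Hm1 ltac:(lia)) as [b Hb].
    exists (Z.max p b). intros q Hq Hpq. destruct (Z.eq_dec p q); [lia|].
    destruct (Z.lt_ge_cases q q0); [exfalso; apply (Hmin q); auto; lia|].
    specialize (Hb q Hq ltac:(lia)). lia.
  - exists p. intros q Hq Hpq. destruct (Z.eq_dec p q); [lia|].
    exfalso; apply Hno; exists q; split; auto; lia.
Qed.

(* Symmetrically apexes strictly decrease from one leg to the previous one, which
   bounds the legs to the left of a leg with an apex. *)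
Lemma legs_left_bounded (n : nat) : forall q s, leg_column x q -> x (q, s) = Apex ->
  s - h <= Z.of_nat n -> exists a, forall p, leg_column x p -> p <= q -> a <= p.
Proof.
  induction n as [|n IH]; intros q s Hq HA Hn.
  - assert (h < s) by (apply (above_horizon q s); rewrite HA; [discriminate | reflexivity]). lia.
  - destruct (classic (exists p, p < q /\ leg_column x p)) as [Hex|Hno].
    + destruct (greatest_below (leg_column x) q Hex) as [p0 [Hp0q [Hp0 Hmax]]].
      destruct (apex_of_leg_with_successor p0 q Hp0 Hq Hp0q) as [s0 [Hs0 HA0]].
      pose proof (apex_row_meets_next_leg p0 q s0 Hp0 Hq Hp0q
                    (fun r Hr => Hmax r (proj1 Hr) (proj2 Hr)) HA0) as H2.
      pose proof (apex_unique x Hv q s (s0 + 1) HA (LUaA_above x Hv q s0 H2)) as E.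
      destruct (IH p0 s0 Hp0 HA0 ltac:(lia)) as [a Ha].
      exists (Z.min a q). intros p Hp Hpq. destruct (Z.eq_dec p q); [lia|].
      destruct (Z.le_gt_cases p p0) as [Hle|Hgt]; [specialize (Ha p Hp Hle); lia|].
      exfalso; apply (Hmax p); auto; lia.
    + exists q. intros p Hp Hpq. destruct (Z.eq_dec p q); [lia|].
      exfalso; apply Hno; exists p; split; auto; lia.
Qed.

Lemma leg_columns_bounded (p0 : Z) : leg_column x p0 -> exists a b, forall p, leg_column x p -> a <= p <= b.
Proof.
  intros Hp0.
  assert (Hup : exists b, forall q, leg_column x q -> p0 <= q -> q <= b).
  { destruct (classic (exists q, p0 < q /\ leg_column x q)) as [[q [Hq1 Hq2]]|Hno].
    - destruct (apex_of_leg_with_successor p0 q Hp0 Hq2 Hq1) as [s [Hs HA]].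
      destruct (mark_below_apex p0 s (leg_foot p0 Hp0) HA) as [m [Hm HM]].
      exact (legs_right_bounded (Z.to_nat (m - h)) p0 m Hp0 HM ltac:(lia) ltac:(lia)).
    - exists p0. intros q Hq Hq0. destruct (Z.eq_dec p0 q); [lia|].
      exfalso; apply Hno; exists q; split; auto; lia. }
  assert (Hlo : exists a, forall p, leg_column x p -> p <= p0 -> a <= p).
  { destruct (classic (exists p, p < p0 /\ leg_column x p)) as [Hex|Hno].
    - destruct (greatest_below (leg_column x) p0 Hex) as [p1 [Hp1 [Hp1l Hmax]]].
      destruct (apex_of_leg_with_successor p1 p0 Hp1l Hp0 Hp1) as [s [Hs HA]].
      destruct (legs_left_bounded (Z.to_nat (s - h)) p1 s Hp1l HA ltac:(lia)) as [a Ha].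
      exists (Z.min a p0). intros p Hp Hpp0. destruct (Z.eq_dec p p0); [lia|].
      destruct (Z.le_gt_cases p p1) as [Hle|Hgt]; [specialize (Ha p Hp Hle); lia|].
      exfalso; apply (Hmax p); auto; lia.
    - exists p0. intros p Hp Hpp. destruct (Z.eq_dec p p0); [lia|].
      exfalso; apply Hno; exists p; split; auto; lia. }
  destruct Hup as [b Hb], Hlo as [a Ha].
  exists (Z.min a p0), (Z.max b p0). intros p Hp. destruct (Z.le_gt_cases p p0) as [Hle|Hgt].
  - specialize (Ha p Hp Hle). lia.
  - specialize (Hb p Hp ltac:(lia)). lia.
Qed.

Lemma foot_between_base_ends (b b' : Z) : x (b, h) = Be -> x (b', h) = Be -> b < b' ->
  exists f, b < f < b' /\ x (f, h) = F.
Proof.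
  intros H1 H2 Hbb. apply NNPP; intro Hno.
  assert (Hgap : forall z, b + 1 <= z -> z < b' -> x (z, h) = Hg).
  { apply (Z_ind_up (fun z => z < b' -> x (z, h) = Hg) (b + 1)).
    - intros Hb1. destruct (base_end_east x Hv b h (or_introl H1)) as [H|H]; [exact H|].
      exfalso; apply Hno; exists (b + 1); split; [lia | exact H].
    - intros z Hz IH Hzb. destruct (base_end_east x Hv z h (or_intror (IH ltac:(lia)))) as [H|H]; [exact H|].
      exfalso; apply Hno; exists (z + 1); split; [lia | exact H]. }
  pose proof (Be_west x Hv (b' - 1) h ltac:(replace (b' - 1 + 1) with b' by lia; exact H2)) as H3.
  destruct (Z.eq_dec b (b' - 1)) as [E|E].
  - subst b. rewrite H1 in H3; discriminate.
  - rewrite (Hgap (b' - 1) ltac:(lia) ltac:(lia)) in H3. discriminate.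
Qed.

Lemma base_ends_separated (b b' : Z) : x (b, h) = Be -> x (b', h) = Be ->
  (forall f, x (f, h) = F -> f <= Z.min b b' \/ Z.max b b' <= f) -> b = b'.
Proof.
  intros H1 H2 Hsep. destruct (Z.lt_total b b') as [Hl|[He|Hl]]; [| exact He |].
  - destruct (foot_between_base_ends b b' H1 H2 Hl) as [f [Hf HF]]. specialize (Hsep f HF). lia.
  - destruct (foot_between_base_ends b' b H2 H1 Hl) as [f [Hf HF]]. specialize (Hsep f HF). lia.
Qed.

End Horizon.

Definition horizonless (x : config sym) : Prop := forall i j, is_horizon (x (i, j)) = false.

Section Horizonless.
Variable x : config sym.
Hypothesis Hv : valid x.
Hypothesis Hfree : horizonless x.

Lemma horizonless_leg_part (q y : Z) : leg_part (x (q, y)) = true -> is_leg (x (q, y)) = true \/ x (q, y) = Apex.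
Proof. intro H. pose proof (Hfree q y) as HF. destruct (x (q, y)); simpl in H, HF; try discriminate; auto. Qed.

(* Below a leg symbol or an apex there are only leg symbols, since there is no foot. *)
Lemma horizonless_leg_down (q y0 : Z) : is_leg (x (q, y0)) = true \/ x (q, y0) = Apex ->
  forall y, y < y0 -> is_leg (x (q, y)) = true.
Proof.
  intros H0 y Hy.
  assert (Hstep : forall z, is_leg (x (q, z)) = true \/ x (q, z) = Apex -> is_leg (x (q, z - 1)) = true).
  { intros z [HL|HA].
    - destruct (leg_below x Hv q (z - 1) ltac:(replace (z - 1 + 1) with z by lia; exact HL)) as [H|H]; [exact H|].
      pose proof (Hfree q (z - 1)) as HF. rewrite H in HF. discriminate.
    - pose proof (Apex_below x Hv q (z - 1) ltac:(replace (z - 1 + 1) with z by lia; exact HA)) as H.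
      destruct (x (q, z - 1)); simpl in H; try discriminate; reflexivity. }
  apply (Z_ind_down (fun y => is_leg (x (q, y)) = true) (y0 - 1)); [apply Hstep, H0 | | lia].
  intros z _ Hz. apply Hstep. left; exact Hz.
Qed.

Lemma horizonless_leg_column (q : Z) : leg_column x q -> forall y,
  is_leg (x (q, y)) = true \/ x (q, y) = Apex \/ x (q, y) = Om.
Proof.
  intros [y1 Hy1] y. pose proof (horizonless_leg_part q y1 Hy1) as H1.
  destruct (Z.lt_ge_cases y y1) as [Hlt|Hge].
  - left. exact (horizonless_leg_down q y1 H1 y Hlt).
  - apply (leg_column_up x Hv q y1); [destruct H1; auto | lia].
Qed.

(* Without a foot to stop it, the diagonal below an apex descends forever. *)
Lemma horizonless_diagonal (p s : Z) : x (p, s) = Apex ->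
  forall z, p + 1 <= z -> is_diag (x (z, s - (z - p))) = true.
Proof.
  intro HA. apply (Z_ind_up (fun z => is_diag (x (z, s - (z - p))) = true) (p + 1)).
  - replace (s - (p + 1 - p)) with (s - 1) by lia.
    apply (Apex_diag_down x Hv p (s - 1)). replace (s - 1 + 1) with s by lia. exact HA.
  - intros z _ IH.
    destruct (diag_down x Hv z (s - (z + 1 - p))
                ltac:(replace (s - (z + 1 - p) + 1) with (s - (z - p)) by lia; exact IH)) as [H|H];
      [exact H|].
    pose proof (Hfree (z + 1) (s - (z + 1 - p))) as HF. rewrite H in HF. discriminate.
Qed.

Lemma horizonless_no_two_legs (p q : Z) : leg_column x p -> leg_column x q -> p < q -> False.
Proof.
  intros Hp Hq Hpq.
  destruct (classic (exists s, x (p, s) = Apex)) as [[s HA]|Hno].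
  - pose proof (horizonless_diagonal p s HA q ltac:(lia)) as Hd.
    destruct (horizonless_leg_column q Hq (s - (q - p))) as [H|[H|H]];
      [destruct (x (q, s - (q - p))); simpl in H, Hd; discriminate | rewrite H in Hd; discriminate
      | rewrite H in Hd; discriminate].
  - destruct Hp as [y1 Hy1].
    assert (Hleg : forall y, is_leg (x (p, y)) = true).
    { intro y. destruct (horizonless_leg_part p y1 Hy1) as [H1|H1]; [|exfalso; eauto].
      destruct (Z.lt_ge_cases y (y1 + 1)) as [Hlt|Hge].
      - exact (horizonless_leg_down p (y1 + 1)
                 ltac:(destruct (leg_above x Hv p y1 H1); auto) y Hlt).
      - apply (Z_ind_up (fun y => is_leg (x (p, y)) = true) y1 H1); [|lia].
        intros z _ Hz. destruct (leg_above x Hv p z Hz) as [H|H]; [exact H | exfalso; eauto]. }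
    destruct Hq as [yq Hyq].
    pose proof (inside_right_of_leg x Hv p (yq - 1) (fun y _ => Hleg y) q ltac:(lia) yq ltac:(lia)) as Hin.
    destruct (horizonless_leg_part q yq Hyq) as [H|H]; [|rewrite H in Hin; discriminate].
    destruct (x (q, yq)); simpl in H, Hin; discriminate.
Qed.

Lemma horizonless_leg_unique (p q : Z) : leg_column x p -> leg_column x q -> p = q.
Proof.
  intros Hp Hq. destruct (Z.lt_total p q) as [H|[H|H]]; auto; exfalso.
  - exact (horizonless_no_two_legs p q Hp Hq H).
  - exact (horizonless_no_two_legs q p Hq Hp H).
Qed.
End Horizonless.

Lemma finite_strip (S : Z * Z -> Prop) (a : Z) (n : nat) :
  (forall p, a <= p < a + Z.of_nat n -> finite_set (fun pt => fst pt = p /\ S pt)) ->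
  finite_set (fun pt => a <= fst pt < a + Z.of_nat n /\ S pt).
Proof.
  induction n as [|n IH]; intros Hcol.
  - exists []. intros pt [Hp _]. lia.
  - apply finite_subset with (fun pt => (a <= fst pt < a + Z.of_nat n /\ S pt) \/
                                        (fst pt = a + Z.of_nat n /\ S pt)).
    + apply finite_union; [apply IH; intros p Hp; apply Hcol; lia | apply Hcol; lia].
    + intros pt [Hp HS]. destruct (Z.eq_dec (fst pt) (a + Z.of_nat n)); [right | left]; split; auto; lia.
Qed.

Definition west_events (x : config sym) (c : Z) : Z * Z -> Prop :=
  fun pt => fst pt < c /\ west_event (x pt) = true.

Definition description_column (x : config sym) (c : Z) : Prop :=
  (forall i j, c < i -> leg_part (x (i, j)) = false) /\ finite_set (west_events x c).

Lemma west_event_cases (s : sym) : west_event s = true -> leg_part s = true \/ s = Be.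
Proof. intro H; destruct s; simpl in H; try discriminate; auto. Qed.

Section Description.
Variable x : config sym.
Hypothesis Hv : valid x.

Lemma leg_part_column (i j : Z) : leg_part (x (i, j)) = true -> leg_column x i.
Proof. intro H; exists j; exact H. Qed.

(* A leg with a successor lies between its foot and its apex. *)
Lemma leg_cells_finite (h p : Z) : horizon_at x h ->
  (leg_column x p -> exists q, p < q /\ leg_column x q) ->
  finite_set (fun pt => fst pt = p /\ leg_part (x pt) = true).
Proof.
  intros Hh Hsucc.
  destruct (classic (leg_column x p)) as [Hp|Hp].
  - destruct (Hsucc Hp) as [q [Hpq Hq]].
    destruct (apex_of_leg_with_successor x Hv h Hh p q Hp Hq Hpq) as [s [_ HA]].
    apply finite_subset with (fun pt : Z * Z => p <= fst pt <= p /\ h <= snd pt <= s); [apply box_finite|].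
    intros [i j] [Hi HL]; simpl in *; subst i. split; [lia|]. split.
    + destruct (Z.lt_ge_cases j h) as [Hlt|Hge]; [|exact Hge].
      rewrite (below_horizon x Hv h Hh p j Hlt) in HL. discriminate.
    + destruct (Z.le_gt_cases j s) as [Hle|Hgt]; [exact Hle|].
      rewrite (Om_up x Hv p s (or_introl HA) j Hgt) in HL. discriminate.
  - exists []. intros [i j] [Hi HL]; simpl in *; subst i. exfalso; apply Hp; exists j; exact HL.
Qed.

Lemma base_ends_west_finite (h a : Z) : horizon_at x h -> (forall p, leg_column x p -> a <= p) ->
  finite_set (fun pt => fst pt < a /\ x pt = Be).
Proof.
  intros Hh Hbound. apply finite_subsingleton. intros [i j] [i' j'] [Hi Hb] [Hi' Hb']; simpl in *.
  assert (j = h) by (apply (horizon_unique x Hv h Hh i); rewrite Hb; reflexivity).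
  assert (j' = h) by (apply (horizon_unique x Hv h Hh i'); rewrite Hb'; reflexivity). subst j j'.
  f_equal. apply (base_ends_separated x Hv h i i' Hb Hb').
  intros f HF. right. assert (Hf : a <= f) by (apply Hbound; exists h; rewrite HF; reflexivity). lia.
Qed.

(* With a horizon, take c the easternmost leg (if any): west of c the west events are
   the leg cells of the finitely many legs, base ends on the horizon between them, and
   at most one base end west of all legs. *)
Lemma horizon_description (h : Z) : horizon_at x h -> exists c, description_column x c.
Proof.
  intro Hh.
  assert (Hac : exists a c, (forall p, leg_column x p -> a <= p <= c) /\
                            (forall p, leg_column x p -> p < c -> leg_column x c)).
  { destruct (classic (exists p, leg_column x p)) as [[p0 Hp0]|Hnone].
    - destruct (leg_columns_bounded x Hv h Hh p0 Hp0) as [a [b Hab]].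
      destruct (greatest_element (leg_column x) b (ex_intro _ p0 Hp0) (fun p Hp => proj2 (Hab p Hp)))
        as [c [Hc Hmax]].
      exists a, c. split; [intros p Hp; split; [apply Hab | apply Hmax]; exact Hp | auto].
    - exists 0, 0. split; intros p Hp; exfalso; apply Hnone; eauto. }
  destruct Hac as [a [c [Hbounds Hc]]].
  exists c. split.
  - intros i j Hi. destruct (leg_part (x (i, j))) eqn:E; [|reflexivity].
    specialize (Hbounds i (leg_part_column i j E)). lia.
  - apply finite_subset with (fun pt => (fst pt < a /\ x pt = Be) \/
                                        (a <= fst pt < a + Z.of_nat (Z.to_nat (c - a)) /\
                                         west_event (x pt) = true)).
    + apply finite_union.
      * apply (base_ends_west_finite h a Hh). intros p Hp. apply Hbounds, Hp.
      * apply finite_strip. intros p Hp.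
        apply finite_subset with (fun pt => (fst pt = p /\ leg_part (x pt) = true) \/
                                            (p <= fst pt <= p /\ h <= snd pt <= h)).
        -- apply finite_union; [|apply box_finite].
           apply (leg_cells_finite h p Hh). intro Hlp. exists c. split; [lia | apply (Hc p Hlp); lia].
        -- intros [i j] [Hi He]; simpl in *. destruct (west_event_cases _ He) as [Hl|Hb]; [left; auto|].
           right. assert (j = h) by (apply (horizon_unique x Hv h Hh i); rewrite Hb; reflexivity). lia.
    + intros [i j] [Hi He]; simpl in *. destruct (west_event_cases _ He) as [Hl|Hb].
      * right. pose proof (Hbounds i (leg_part_column i j Hl)). split; [lia | exact He].
      * destruct (Z.lt_ge_cases i a); [left; auto | right; split; [lia | exact He]].
Qed.

(* Without a horizon there is at most one leg and no base end. *)
Lemma horizonless_description : horizonless x -> exists c, description_column x c.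
Proof.
  intro Hfree.
  assert (Hc : exists c, forall p, leg_column x p -> p = c).
  { destruct (classic (exists p, leg_column x p)) as [[p0 Hp0]|Hnone].
    - exists p0. intros p Hp. exact (horizonless_leg_unique x Hv Hfree p p0 Hp Hp0).
    - exists 0. intros p Hp. exfalso; apply Hnone; eauto. }
  destruct Hc as [c Hc]. exists c. split.
  - intros i j Hi. destruct (leg_part (x (i, j))) eqn:E; [|reflexivity].
    specialize (Hc i (leg_part_column i j E)). lia.
  - exists []. intros [i j] [Hi He]; simpl in *. exfalso.
    destruct (west_event_cases _ He) as [Hl|Hb].
    + specialize (Hc i (leg_part_column i j Hl)). lia.
    + pose proof (Hfree i j) as H. rewrite Hb in H. discriminate.
Qed.

Lemma description_exists : exists c, description_column x c.
Proof.
  destruct (classic (exists i h, is_horizon (x (i, h)) = true)) as [[i [h H]]|Hnone].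
  - apply (horizon_description h). exists i; exact H.
  - apply horizonless_description. intros i j.
    destruct (is_horizon (x (i, j))) eqn:E; [exfalso; apply Hnone; eauto | reflexivity].
Qed.
End Description.

Lemma monotone_le (g : Z -> nat) : (forall y, (g y <= g (y + 1)%Z)%nat) ->
  forall y y', y <= y' -> (g y <= g y')%nat.
Proof.
  intros Hg y y' Hyy. apply (Z_ind_up (fun y' => (g y <= g y')%nat) y); [lia | | exact Hyy].
  intros z _ IH. specialize (Hg z). lia.
Qed.

Lemma monotone_constant_up (g : Z -> nat) (bound : nat) :
  (forall y, (g y <= g (y + 1)%Z)%nat) -> (forall y, (g y <= bound)%nat) ->
  exists Y1, forall y, Y1 <= y -> g y = g Y1.
Proof.
  intros Hg Hb.
  assert (H : forall n y0, (bound - g y0 <= n)%nat -> exists Y1, forall y, Y1 <= y -> g y = g Y1).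
  { induction n as [|n IH]; intros y0 Hn.
    - exists y0. intros y Hy. pose proof (monotone_le g Hg y0 y Hy). specialize (Hb y). lia.
    - destruct (classic (exists y, y0 < y /\ (g y0 < g y)%nat)) as [[y [H1 H2]]|Hno].
      + apply (IH y). specialize (Hb y). lia.
      + exists y0. intros y Hy. pose proof (monotone_le g Hg y0 y Hy).
        destruct (Z.eq_dec y y0) as [->|Hne]; [reflexivity|].
        destruct (Nat.eq_dec (g y) (g y0)) as [E|E]; [exact E|].
        exfalso. apply Hno. exists y. split; lia. }
  exact (H _ 0 (le_n _)).
Qed.

Lemma monotone_constant_down (g : Z -> nat) :
  (forall y, (g y <= g (y + 1)%Z)%nat) -> exists Y0, forall y, y <= Y0 -> g y = g Y0.
Proof.
  intros Hg.
  assert (H : forall n y0, (g y0 <= n)%nat -> exists Y0, forall y, y <= Y0 -> g y = g Y0).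
  { induction n as [|n IH]; intros y0 Hn.
    - exists y0. intros y Hy. pose proof (monotone_le g Hg y y0 Hy). lia.
    - destruct (classic (exists y, y < y0 /\ (g y < g y0)%nat)) as [[y [H1 H2]]|Hno].
      + apply (IH y). lia.
      + exists y0. intros y Hy. pose proof (monotone_le g Hg y y0 Hy).
        destruct (Z.eq_dec y y0) as [->|Hne]; [reflexivity|].
        destruct (Nat.eq_dec (g y) (g y0)) as [E|E]; [exact E|].
        exfalso. apply Hno. exists y. split; lia. }
  exact (H _ 0 (le_n _)).
Qed.

(* Along a column, symbols only change upwards to a symbol of higher rank. *)
Definition rank (s : sym) : nat :=
  match s with
  | B => 0 | Hg => 1 | F => 2 | Be => 3 | Hl => 4 | Hb => 5 | Tl => 6 | HL => 7 | La => 8 | Mg => 9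
  | HX => 10 | Mt => 11 | Tu => 12 | HU => 13 | Up => 14 | Ar => 15 | LLom => 16 | LMom => 17
  | LUom => 18 | LLla => 19 | LMla => 20 | LUaM => 21 | LUup => 22 | LUaA => 23 | Apex => 24 | Om => 25
  end.

Lemma tiles_rank : forallb (fun w => match w with (a, _, c, _) =>
  sym_beq a c || Nat.ltb (rank a) (rank c) end) tiles = true.
Proof. vm_compute. reflexivity. Qed.

Lemma column_step (x : config sym) (c y : Z) : valid x ->
  x (c, y) = x (c, y + 1) \/ (rank (x (c, y)) < rank (x (c, y + 1)%Z))%nat.
Proof.
  intro Hv. pose proof (proj1 (forallb_forall _ tiles) tiles_rank _ (valid_window x c y Hv)) as H.
  simpl in H. apply orb_true_iff in H. destruct H as [H|H].
  - left. apply sym_beq_iff, H.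
  - right. apply Nat.ltb_lt, H.
Qed.

Lemma rank_bound (s : sym) : (rank s <= 25)%nat.
Proof. destruct s; simpl; lia. Qed.

Lemma column_constant_far (x : config sym) (c : Z) : valid x ->
  exists Y0 Y1, (forall y, y <= Y0 -> x (c, y) = x (c, Y0)) /\ (forall y, Y1 <= y -> x (c, y) = x (c, Y1)).
Proof.
  intro Hv. set (g := fun y => rank (x (c, y))).
  assert (Hg : forall y, (g y <= g (y + 1)%Z)%nat).
  { intro y. unfold g. destruct (column_step x c y Hv) as [E|E]; [rewrite E|]; lia. }
  assert (Hconst : forall a y, a <= y -> (forall z, a <= z <= y -> g z = g a) -> x (c, y) = x (c, a)).
  { intros a y Hay Hg_const.
    apply (Z_ind_up (fun y' => y' <= y -> x (c, y') = x (c, a)) a); [reflexivity | | exact Hay | lia].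
    intros z Hz IH Hzy. rewrite <- (IH ltac:(lia)).
    destruct (column_step x c z Hv) as [E|E]; [symmetry; exact E|].
    exfalso. fold (g z) (g (z + 1)) in E. rewrite (Hg_const z), (Hg_const (z + 1)) in E by lia. lia. }
  destruct (monotone_constant_down g Hg) as [Y0 H0].
  destruct (monotone_constant_up g 25 Hg (fun y => rank_bound _)) as [Y1 H1].
  exists Y0, Y1. split.
  - intros y Hy. symmetry. apply Hconst; [exact Hy|]. intros z Hz. rewrite (H0 z), (H0 y); lia.
  - intros y Hy. apply Hconst; [exact Hy|]. intros z Hz. apply H1; lia.
Qed.

Definition column_changes (x : config sym) (c : Z) : Z * Z -> Prop := fun pt =>
  fst pt = c /\ (snd pt = 0 \/ (0 < snd pt /\ x pt <> x (c, snd pt - 1)) \/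
                 (snd pt < 0 /\ x pt <> x (c, snd pt + 1))).

Lemma column_changes_finite (x : config sym) (c : Z) : valid x -> finite_set (column_changes x c).
Proof.
  intro Hv. destruct (column_constant_far x c Hv) as [Y0 [Y1 [H0 H1]]].
  apply finite_subset with (fun pt => c <= fst pt <= c /\ Z.min Y0 0 <= snd pt <= Z.max Y1 0);
    [apply box_finite|].
  intros [i j] [Hi Hj]; simpl in *. subst i. split; [lia|].
  destruct Hj as [Hj|[[Hj Hn]|[Hj Hn]]]; [lia | |].
  - split; [lia|]. destruct (Z.le_gt_cases j Y1); [lia|].
    exfalso. apply Hn. rewrite (H1 j), (H1 (j - 1)) by lia. reflexivity.
  - split; [|lia]. destruct (Z.le_gt_cases Y0 j); [lia|].
    exfalso. apply Hn. rewrite (H0 j), (H0 (j + 1)) by lia. reflexivity.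
Qed.

(* Local contexts (a, b, c, u): a, b, c are three vertically consecutive cells of a
   column and u is the west (resp. east) neighbour of the middle one, as allowed by
   the two tiles containing u and b. *)
Definition west_contexts : list tile :=
  flat_map (fun w1 => match w1 with (_, a, u, b) =>
    flat_map (fun w2 => match w2 with (u', b', _, c) =>
      if sym_beq u u' && sym_beq b b' then [(a, b, c, u)] else [] end) tiles end) tiles.

Definition east_contexts : list tile :=
  flat_map (fun w1 => match w1 with (a, _, b, u) =>
    flat_map (fun w2 => match w2 with (b', u', c, _) =>
      if sym_beq b b' && sym_beq u u' then [(a, b, c, u)] else [] end) tiles end) tiles.

(* The context determines u, except when u belongs to the exceptional class ev. *)
Definition determined (ev : sym -> bool) (ctx : list tile) : bool :=
  forallb (fun e1 => forallb (fun e2 => match e1, e2 with (a, b, c, u), (a', b', c', u') =>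
    implb (sym_beq a a' && sym_beq b b' && sym_beq c c' && negb (ev u) && negb (ev u'))
          (sym_beq u u') end) ctx) ctx.

Lemma determined_spec (ev : sym -> bool) (ctx : list tile) : determined ev ctx = true ->
  forall a b c u u', In (a, b, c, u) ctx -> In (a, b, c, u') ctx -> ev u = false -> ev u' = false -> u = u'.
Proof.
  intros Hdet a b c u u' H1 H2 E1 E2. unfold determined in Hdet. rewrite forallb_forall in Hdet.
  specialize (Hdet _ H1). rewrite forallb_forall in Hdet. specialize (Hdet _ H2).
  simpl in Hdet. rewrite !sym_beq_refl, E1, E2 in Hdet. apply sym_beq_iff, Hdet.
Qed.

Lemma west_determined : determined west_event west_contexts = true.
Proof. vm_compute. reflexivity. Qed.

Lemma east_determined : determined leg_part east_contexts = true.
Proof. vm_compute. reflexivity. Qed.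

Lemma west_context_of (x : config sym) (i j : Z) : valid x ->
  In (x (i, j - 1), x (i, j), x (i, j + 1), x (i - 1, j)) west_contexts.
Proof.
  intro Hv. apply in_flat_map. exists (window x (i - 1, j - 1)). split; [apply valid_window, Hv|].
  apply in_flat_map. exists (window x (i - 1, j)). split; [apply valid_window, Hv|].
  unfold window. replace (i - 1 + 1) with i by lia. replace (j - 1 + 1) with j by lia.
  rewrite !sym_beq_refl. simpl. auto.
Qed.

Lemma east_context_of (x : config sym) (i j : Z) : valid x ->
  In (x (i, j - 1), x (i, j), x (i, j + 1), x (i + 1, j)) east_contexts.
Proof.
  intro Hv. apply in_flat_map. exists (window x (i, j - 1)). split; [apply valid_window, Hv|].
  apply in_flat_map. exists (window x (i, j)). split; [apply valid_window, Hv|].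
  unfold window. replace (j - 1 + 1) with j by lia.
  rewrite !sym_beq_refl. simpl. auto.
Qed.

Section Uniqueness.
Variables x y : config sym.
Hypothesis Hx : valid x.
Hypothesis Hy : valid y.

Lemma column_agree_west (i : Z) : (forall j, x (i, j) = y (i, j)) ->
  forall j, west_event (x (i - 1, j)) = false -> west_event (y (i - 1, j)) = false ->
  x (i - 1, j) = y (i - 1, j).
Proof.
  intros Hcol j E1 E2. apply (determined_spec _ _ west_determined (x (i, j - 1)) (x (i, j)) (x (i, j + 1)));
    [apply west_context_of, Hx | rewrite !Hcol; apply west_context_of, Hy | exact E1 | exact E2].
Qed.

Lemma column_agree_east (i : Z) : (forall j, x (i, j) = y (i, j)) ->
  forall j, leg_part (x (i + 1, j)) = false -> leg_part (y (i + 1, j)) = false ->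
  x (i + 1, j) = y (i + 1, j).
Proof.
  intros Hcol j E1 E2. apply (determined_spec _ _ east_determined (x (i, j - 1)) (x (i, j)) (x (i, j + 1)));
    [apply east_context_of, Hx | rewrite !Hcol; apply east_context_of, Hy | exact E1 | exact E2].
Qed.
End Uniqueness.

(* L lists the values of x on its description data relative to column c: the west
   events left of c and the changes along column c. *)
Definition describes (x : config sym) (c : Z) (L : list ((Z * Z) * sym)) : Prop :=
  (forall i j, c < i -> leg_part (x (i, j)) = false) /\
  (forall p s, In (p, s) L -> x p = s) /\
  (forall p, west_events x c p -> In (p, x p) L) /\
  (forall p, column_changes x c p -> In (p, x p) L).

Lemma agree_by_list (x y : config sym) (L : list ((Z * Z) * sym)) (p p' : Z * Z) :
  (forall q s, In (q, s) L -> x q = s) -> (forall q s, In (q, s) L -> y q = s) -> x p = y p ->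
  (x p' <> x p -> In (p', x p') L) -> (y p' <> y p -> In (p', y p') L) -> x p' = y p'.
Proof.
  intros Lx Ly E Hx Hy.
  destruct (sym_eq_dec (x p') (x p)) as [Ex|Ex]; [|symmetry; apply Ly, Hx, Ex].
  destruct (sym_eq_dec (y p') (y p)) as [Ey|Ey]; [congruence | apply Lx, Hy, Ey].
Qed.

Section DescriptionUnique.
Variables (x y : config sym) (c : Z) (L : list ((Z * Z) * sym)).
Hypotheses (Hx : valid x) (Hy : valid y) (Dx : describes x c L) (Dy : describes y c L).

Lemma described_column_agree (j : Z) : x (c, j) = y (c, j).
Proof.
  destruct Dx as [_ [Lx [_ Cx]]], Dy as [_ [Ly [_ Cy]]].
  assert (H0 : x (c, 0) = y (c, 0)) by (symmetry; apply Ly, Cx; split; simpl; auto).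
  destruct (Z.le_gt_cases 0 j) as [Hj|Hj].
  - apply (Z_ind_up (fun j => x (c, j) = y (c, j)) 0 H0); [|exact Hj].
    intros z Hz IH. apply (agree_by_list x y L (c, z) (c, z + 1) Lx Ly IH);
      intro Hne; [apply Cx | apply Cy]; split; simpl; auto; right; left;
      (split; [lia | replace (z + 1 - 1) with z by lia; exact Hne]).
  - apply (Z_ind_down (fun j => x (c, j) = y (c, j)) 0 H0); [|lia].
    intros z Hz IH. apply (agree_by_list x y L (c, z) (c, z - 1) Lx Ly IH);
      intro Hne; [apply Cx | apply Cy]; split; simpl; auto; right; right;
      (split; [lia | replace (z - 1 + 1) with z by lia; exact Hne]).
Qed.

Lemma described_unique (p : Z * Z) : x p = y p.
Proof.
  destruct Dx as [Rx [Lx [Ex _]]], Dy as [Ry [Ly [Ey _]]].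
  assert (Hwest : forall n j, x (c - Z.of_nat n, j) = y (c - Z.of_nat n, j)).
  { induction n as [|n IH]; intro j; [rewrite Z.sub_0_r; apply described_column_agree|].
    replace (c - Z.of_nat (S n)) with (c - Z.of_nat n - 1) by lia.
    destruct (west_event (x (c - Z.of_nat n - 1, j))) eqn:E1.
    { symmetry. apply Ly, Ex. split; simpl; [lia | exact E1]. }
    destruct (west_event (y (c - Z.of_nat n - 1, j))) eqn:E2.
    { apply Lx, Ey. split; simpl; [lia | exact E2]. }
    apply (column_agree_west x y Hx Hy); auto. }
  assert (Heast : forall n j, x (c + Z.of_nat n, j) = y (c + Z.of_nat n, j)).
  { induction n as [|n IH]; intro j; [rewrite Z.add_0_r; apply described_column_agree|].
    replace (c + Z.of_nat (S n)) with (c + Z.of_nat n + 1) by lia.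
    apply (column_agree_east x y Hx Hy); auto; [apply Rx | apply Ry]; lia. }
  destruct p as [i j]. destruct (Z.le_gt_cases i c).
  - replace i with (c - Z.of_nat (Z.to_nat (c - i))) by lia. apply Hwest.
  - replace i with (c + Z.of_nat (Z.to_nat (i - c))) by lia. apply Heast.
Qed.
End DescriptionUnique.

Lemma description_list_exists (x : config sym) : valid x -> exists c L, describes x c L.
Proof.
  intro Hv. destruct (description_exists x Hv) as [c [Hr [l1 Hl1]]].
  destruct (column_changes_finite x c Hv) as [l2 Hl2].
  exists c, (map (fun p => (p, x p)) (l1 ++ l2)). repeat split; auto.
  - intros p s Hin. apply in_map_iff in Hin. destruct Hin as [q [E _]]. inversion E; subst; auto.
  - intros p Hp. apply (in_map (fun p => (p, x p))). apply in_or_app; left; auto.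
  - intros p Hp. apply (in_map (fun p => (p, x p))). apply in_or_app; right; auto.
Qed.

Definition enumerates {T : Type} (e : nat -> T) : Prop := forall t, exists n, e n = t.

Definition enum_pair {T U : Type} (e1 : nat -> T) (e2 : nat -> U) (n : nat) : T * U :=
  let (a, b) := Cantor.of_nat n in (e1 a, e2 b).

Lemma enum_pair_ok {T U : Type} (e1 : nat -> T) (e2 : nat -> U) :
  enumerates e1 -> enumerates e2 -> enumerates (enum_pair e1 e2).
Proof.
  intros H1 H2 [t u]. destruct (H1 t) as [a Ha], (H2 u) as [b Hb].
  exists (Cantor.to_nat (a, b)). unfold enum_pair. rewrite Cantor.cancel_of_to, Ha, Hb. reflexivity.
Qed.

Fixpoint decode_list {T : Type} (e : nat -> T) (len code : nat) : list T :=
  match len with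
  | O => []
  | S len' => let (a, b) := Cantor.of_nat code in e a :: decode_list e len' b
  end.

Definition enum_list {T : Type} (e : nat -> T) (n : nat) : list T :=
  let (len, code) := Cantor.of_nat n in decode_list e len code.

Lemma enum_list_ok {T : Type} (e : nat -> T) : enumerates e -> enumerates (enum_list e).
Proof.
  intros He l.
  assert (Hcode : exists code, decode_list e (length l) code = l).
  { induction l as [|t l [code IH]]; [exists 0%nat; reflexivity|].
    destruct (He t) as [a Ha]. exists (Cantor.to_nat (a, code)).
    cbn [decode_list length]. rewrite Cantor.cancel_of_to, Ha, IH. reflexivity. }
  destruct Hcode as [code Hcode]. exists (Cantor.to_nat (length l, code)).
  unfold enum_list. rewrite Cantor.cancel_of_to. exact Hcode.
Qed.

Definition enum_Z (n : nat) : Z := let (a, b) := Cantor.of_nat n in Z.of_nat a - Z.of_nat b.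

Lemma enum_Z_ok : enumerates enum_Z.
Proof.
  intro z. exists (Cantor.to_nat (Z.to_nat z, Z.to_nat (- z))).
  unfold enum_Z. rewrite Cantor.cancel_of_to. lia.
Qed.

Definition enum_sym (n : nat) : sym := nth n syms B.

Lemma enum_sym_ok : enumerates enum_sym.
Proof. intro s. destruct (In_nth syms s B (syms_complete s)) as [n [_ Hn]]. exists n; exact Hn. Qed.

Definition enum_description : nat -> Z * list ((Z * Z) * sym) :=
  enum_pair enum_Z (enum_list (enum_pair (enum_pair enum_Z enum_Z) enum_sym)).

Lemma enum_description_ok : enumerates enum_description.
Proof. repeat first [apply enum_pair_ok | apply enum_list_ok | apply enum_Z_ok | apply enum_sym_ok]. Qed.

(* Some valid configuration with the given description, if there is one. *)
Definition realize (d : Z * list ((Z * Z) * sym)) : config sym :=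
  match excluded_middle_informative (exists y, valid y /\ describes y (fst d) (snd d)) with
  | left H => proj1_sig (constructive_indefinite_description _ H)
  | right _ => fun _ => B
  end.

(* Valid configurations are determined by finite descriptions, so there are
   countably many of them. *)
Lemma SFT_countable : countable_set (SFT forbidden).
Proof.
  exists (fun n => realize (enum_description n)). intros x Hx. apply SFT_valid in Hx.
  destruct (description_list_exists x Hx) as [c [L HL]].
  destruct (enum_description_ok (c, L)) as [n Hn]. exists n. rewrite Hn. unfold realize.
  destruct (excluded_middle_informative _) as [H|H].
  - destruct (constructive_indefinite_description _ H) as [y [Hy Hd]]. simpl.
    intro w. symmetry. apply (described_unique x y c L); auto.
  - exfalso; apply H; exists x; auto.
Qed.

(* In a block with index j, apex height S and mark height M,
   the cell at horizontal distance d >= 0 from the leg and height y carries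
   block_symbol j S M d y; west of the first block the configuration is
   west_symbol y. *)
Definition leg_symbol (j S M y : Z) : sym :=
  if y <? S then
    if j =? 1 then (if y <? M then LLom else if y =? M then LMom else LUom)
    else (if y <? M then LLla else if y =? M then LMla else if y =? M + 1 then LUaM
          else if y <? S - 1 then LUup else LUaA)
  else if y =? S then Apex else Om.

Definition block_symbol (j S M d y : Z) : sym :=
  if y <? 0 then B else
  if y =? 0 then (if d =? 0 then F else if d <? S then Hb else if d =? S then Be else Hg) else
  if d =? 0 then leg_symbol j S M y else
  if d + y <? S then (if y <? M then Tl else if y =? M then Mt else Tu)
  else if d + y =? S then (if y <? M then HL else if y =? M then HX else HU)
  else (if y <? M then La else if y =? M then Mg else if y <? S then Up else if y =? S then Ar else Om).

Definition west_symbol (y : Z) : sym := if y <? 0 then B else if y =? 0 then Hl else Om.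

(* The four kinds of tiles of these configurations are allowed: each check is a
   finite case analysis on the comparisons occurring in the symbol definitions. *)
Ltac bool_to_prop H :=
  first [ apply Z.ltb_lt in H | apply Z.ltb_ge in H | apply Z.eqb_eq in H | apply Z.eqb_neq in H ].
Ltac split_ifs := match goal with |- context [if ?b then _ else _] =>
  let E := fresh "E" in destruct b eqn:E; bool_to_prop E; try (exfalso; lia) end.
Ltac check_tile := unfold block_symbol, leg_symbol, west_symbol; repeat split_ifs; vm_compute; reflexivity.

Lemma west_tile (y : Z) : allowed (west_symbol y, west_symbol y, west_symbol (y + 1), west_symbol (y + 1)) = true.
Proof. check_tile. Qed.

Lemma first_leg_tile (S M y : Z) : 1 <= M -> M + 2 <= S ->
  allowed (west_symbol y, block_symbol 1 S M 0 y, west_symbol (y + 1), block_symbol 1 S M 0 (y + 1)) = true.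
Proof. intros. check_tile. Qed.

Lemma block_tile (j S M d y : Z) : 1 <= j -> 1 <= M -> M + 2 <= S -> (j <> 1 -> M + 4 <= S) -> 0 <= d ->
  allowed (block_symbol j S M d y, block_symbol j S M (d + 1) y,
           block_symbol j S M d (y + 1), block_symbol j S M (d + 1) (y + 1)) = true.
Proof. intros. check_tile. Qed.

Lemma next_leg_tile (j S M D y : Z) : 1 <= j -> 2 <= M -> M + 2 <= S -> (j <> 1 -> M + 4 <= S) -> D >= S + 1 ->
  allowed (block_symbol j S M D y, block_symbol (j + 1) (S + 1) (M - 1) 0 y,
           block_symbol j S M D (y + 1), block_symbol (j + 1) (S + 1) (M - 1) 0 (y + 1)) = true.
Proof. intros. check_tile. Qed.

(* For an increasing list cs of leg columns, the block (start column, index) that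
   column x belongs to, indices starting at j. *)
Fixpoint block_of (cs : list Z) (j x : Z) : option (Z * Z) :=
  match cs with
  | [] => None
  | c :: rest => if c <=? x then
                   match block_of rest (j + 1) x with None => Some (c, j) | Some r => Some r end
                 else None
  end.

(* The configuration with legs at the columns cs, the block with index j having
   apex height a + j and mark height b - j. *)
Definition blocks (a b : Z) (cs : list Z) : config sym := fun v =>
  let (x, y) := v in
  match block_of cs 1 x with
  | None => west_symbol y
  | Some (c, j) => block_symbol j (a + j) (b - j) (x - c) y
  end.

(* Consecutive legs leave room for the whole base of the triangle in between. *)
Fixpoint spaced (a : Z) (cs : list Z) (j : Z) : Prop :=
  match cs with
  | [] => True
  | c :: rest => match rest with [] => True | c' :: _ => c' - c >= a + j + 2 end /\ spaced a rest (j + 1)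
  end.

(* How block_of changes between columns x and x + 1: both west of all legs; x + 1 is
   the first leg; both in the same block; or x + 1 starts the next block. *)
Lemma block_of_step (a : Z) (cs : list Z) : forall j0 x, 0 <= a -> 0 <= j0 -> spaced a cs j0 ->
  (block_of cs j0 x = None /\ block_of cs j0 (x + 1) = None) \/
  (block_of cs j0 x = None /\ block_of cs j0 (x + 1) = Some (x + 1, j0) /\ hd_error cs = Some (x + 1)) \/
  (exists c j, block_of cs j0 x = Some (c, j) /\ block_of cs j0 (x + 1) = Some (c, j) /\ c <= x /\
               j0 <= j /\ j < j0 + Z.of_nat (length cs)) \/
  (exists c j, block_of cs j0 x = Some (c, j) /\ block_of cs j0 (x + 1) = Some (x + 1, j + 1) /\
               x + 1 - c >= a + j + 2 /\ j0 <= j /\ j + 1 < j0 + Z.of_nat (length cs)).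
Proof.
  induction cs as [|c rest IH]; intros j0 x Ha Hj0 Hsp; [left; simpl; auto|].
  simpl in Hsp. destruct Hsp as [Hgap Hsp].
  simpl block_of. destruct (Z.leb_spec c x) as [Hcx|Hcx].
  - rewrite (proj2 (Z.leb_le c (x + 1))) by lia.
    destruct (IH (j0 + 1) x Ha ltac:(lia) Hsp) as
      [[H1 H2]|[[H1 [H2 H3]]|[[c1 [j1 [H1 [H2 [H3 [H4 H5]]]]]]|[c1 [j1 [H1 [H2 [H3 [H4 H5]]]]]]]]].
    + right; right; left. exists c, j0. rewrite H1, H2. simpl length; rewrite Nat2Z.inj_succ.
      repeat split; auto; lia.
    + right; right; right. exists c, j0. rewrite H1, H2.
      destruct rest as [|c' rest']; simpl in H3; [discriminate|]. inversion H3; subst c'.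
      simpl length; rewrite Nat2Z.inj_succ. repeat split; try lia.
    + right; right; left. exists c1, j1. rewrite H1, H2. simpl length; rewrite Nat2Z.inj_succ.
      repeat split; auto; lia.
    + right; right; right. exists c1, j1. rewrite H1, H2. simpl length; rewrite Nat2Z.inj_succ.
      repeat split; auto; lia.
  - destruct (Z.leb_spec c (x + 1)) as [Hcx1|Hcx1].
    + right; left. assert (c = x + 1) by lia. subst c. split; [reflexivity|]. split; [|reflexivity].
      destruct rest as [|c' rest']; [reflexivity|].
      simpl. rewrite (proj2 (Z.leb_gt c' (x + 1))) by lia. reflexivity.
    + left; split; reflexivity.
Qed.

(* With at most b - 1 legs (so that all marks stay above the horizon), these
   configurations are valid. *)
Lemma blocks_valid (a b : Z) (cs : list Z) : 2 <= b -> b <= a -> spaced a cs 1 ->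
  Z.of_nat (length cs) <= b - 1 -> valid (blocks a b cs).
Proof.
  intros Hb Hab Hsp Hlen i j. unfold window, blocks.
  destruct (block_of_step a cs 1 i ltac:(lia) ltac:(lia) Hsp) as
    [[H1 H2]|[[H1 [H2 _]]|[[c [k [H1 [H2 [H3 [H4 H5]]]]]]|[c [k [H1 [H2 [H3 [H4 H5]]]]]]]]];
    rewrite H1, H2.
  - apply west_tile.
  - replace (i + 1 - (i + 1)) with 0 by lia. apply first_leg_tile; lia.
  - replace (i + 1 - c) with (i - c + 1) by lia. apply block_tile; lia.
  - replace (i + 1 - (i + 1)) with 0 by lia.
    replace (a + (k + 1)) with (a + k + 1) by lia. replace (b - (k + 1)) with (b - k - 1) by lia.
    apply next_leg_tile; lia.
Qed.

Lemma block_of_app_west (cs : list Z) (c' j0 x : Z) : x < c' -> block_of (cs ++ [c']) j0 x = block_of cs j0 x.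
Proof.
  revert j0; induction cs as [|c rest IH]; intros j0 Hx; simpl.
  - rewrite (proj2 (Z.leb_gt c' x)) by lia. reflexivity.
  - destruct (c <=? x); [rewrite IH by exact Hx|]; reflexivity.
Qed.

Lemma block_of_app_new (cs : list Z) (c' j0 : Z) : (forall c, In c cs -> c < c') ->
  block_of (cs ++ [c']) j0 c' = Some (c', j0 + Z.of_nat (length cs)).
Proof.
  revert j0; induction cs as [|c rest IH]; intros j0 Hc; simpl.
  - rewrite Z.leb_refl, Z.add_0_r. reflexivity.
  - rewrite (proj2 (Z.leb_le c c')) by (apply Z.lt_le_incl, Hc; left; reflexivity).
    rewrite IH by (intros; apply Hc; right; assumption). f_equal. f_equal. lia.
Qed.

Lemma block_of_in (cs : list Z) (j0 x c j : Z) : block_of cs j0 x = Some (c, j) -> In c cs.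
Proof.
  revert j0; induction cs as [|c0 rest IH]; intros j0 H; simpl in H; [discriminate|].
  destruct (c0 <=? x); [|discriminate].
  destruct (block_of rest (j0 + 1) x) as [[c1 j1]|] eqn:E.
  - inversion H; subst. right. exact (IH _ E).
  - inversion H; subst. left; reflexivity.
Qed.

Lemma spaced_app (a : Z) (cs : list Z) (j0 c' : Z) : spaced a cs j0 ->
  (forall c, In c cs -> c' - c >= a + j0 + Z.of_nat (length cs) + 1) -> spaced a (cs ++ [c']) j0.
Proof.
  revert j0; induction cs as [|c rest IH]; intros j0 Hsp Hc; simpl; [auto|].
  simpl in Hsp. destruct Hsp as [Hgap Hsp]. split.
  - destruct rest as [|c1 r]; simpl; [specialize (Hc c (or_introl eq_refl)); simpl in Hc; lia | exact Hgap].
  - apply IH; [exact Hsp|]. intros c0 Hin. specialize (Hc c0 (or_intror Hin)).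
    simpl length in Hc. lia.
Qed.

Definition abs_sum (cs : list Z) : Z := fold_right (fun c acc => Z.abs c + acc) 0 cs.

Lemma abs_sum_bound (cs : list Z) : 0 <= abs_sum cs /\ forall c, In c cs -> c <= abs_sum cs.
Proof.
  induction cs as [|c rest [IH0 IH]]; simpl; [split; [lia | intros _ []]|].
  split; [lia|]. intros c0 [<-|Hin]; [lia | specialize (IH c0 Hin); lia].
Qed.

Lemma far_extension (a b : Z) (cs : list Z) (N : Z) : spaced a cs 1 ->
  exists c', spaced a (cs ++ [c']) 1 /\ agree_box N (blocks a b cs) (blocks a b (cs ++ [c'])) /\
             blocks a b (cs ++ [c']) (c', 0) <> blocks a b cs (c', 0).
Proof.
  intro Hsp. destruct (abs_sum_bound cs) as [Hs0 Hs].
  set (c' := Z.abs N + abs_sum cs + Z.abs a + Z.of_nat (length cs) + 10).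
  assert (Hc' : forall c, In c cs -> c < c') by (intros c Hc; specialize (Hs c Hc); unfold c'; lia).
  exists c'. split; [|split].
  - apply spaced_app; [exact Hsp|]. intros c Hc. specialize (Hs c Hc). unfold c'. lia.
  - intros i j Hi Hj. unfold blocks. rewrite block_of_app_west by (unfold c'; lia). reflexivity.
  - unfold blocks. rewrite block_of_app_new by exact Hc'.
    replace (c' - c') with 0 by lia.
    destruct (block_of cs 1 c') as [[c j]|] eqn:E; [|discriminate].
    specialize (Hc' c (block_of_in cs 1 c' c j E)).
    unfold block_symbol. simpl. rewrite (proj2 (Z.eqb_neq (c' - c) 0)) by lia.
    destruct (c' - c <? a + j); [discriminate|]. destruct (c' - c =? a + j); discriminate.
Qed.

(* A configuration with k legs lies in the (b - 1 - k)-th derivative: it is a limit of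
   configurations with k + 1 legs. *)
Lemma blocks_in_derivative (a b : Z) (n : nat) : 2 <= b -> b <= a -> forall cs, spaced a cs 1 ->
  Z.of_nat (length cs) + Z.of_nat n = b - 1 -> deriv (SFT forbidden) n (blocks a b cs).
Proof.
  intros Hb Hab. induction n as [|n IH]; intros cs Hsp Hlen.
  - apply SFT_valid, blocks_valid; auto; lia.
  - assert (Hext : forall N, exists y, deriv (SFT forbidden) n y /\ agree_box N (blocks a b cs) y /\
                                       exists w, y w <> blocks a b cs w).
    { intro N. destruct (far_extension a b cs N Hsp) as [c' [Hsp' [Hag Hdiff]]].
      exists (blocks a b (cs ++ [c'])). split; [|split; [exact Hag | exists (c', 0); exact Hdiff]].
      apply IH; [exact Hsp'|]. rewrite length_app. simpl length. lia. }
    split.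
    + apply (deriv_closed _ SFT_closed n). intro N. destruct (Hext N) as [y [Hy [Hag _]]]. eauto.
    + apply not_isolated_of_approx. exact Hext.
Qed.

Lemma derivatives_nonempty (n : nat) : exists x, deriv (SFT forbidden) n x.
Proof.
  exists (blocks (Z.of_nat n + 2) (Z.of_nat n + 2) [0]).
  apply blocks_in_derivative; [lia | lia | simpl; auto | simpl length; lia].
Qed.

Theorem mainTheorem4 :
  exists (A : Type) (F : list (pattern A)),
    finite_type A /\
    countable_set (SFT F) /\
    forall n : nat, ~ (forall x, deriv (SFT F) n x <-> deriv (SFT F) (S n) x).
Proof.
  exists sym, forbidden. split; [exact sym_finite|]. split; [exact SFT_countable|].
  apply derivatives_never_stabilize.
  - exact SFT_closed.
  - exact SFT_countable.
  - exact derivatives_nonempty.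
Qed.
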